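(* Let $V$ be a grading-restricted vertex algebra, $W$ a $V$-module, $n\in\mathbb Z_+$, and let $\Phi:V^{\otimes n}\to\widetilde W_{z_1,\dots,z_n}$ be a linear map having the $L(-1)$-derivative property. Then: (a) for $v_1,\dots,v_n\in V$, $w'\in W'$, $(z_1,\dots,z_n)\in F_n\mathbb C$ and $z\in\mathbb C$, $$\langle w',e^{zL_W(-1)}\Phi(v_1\otimes\cdots\otimes v_n)(z_1,\dots,z_n)\rangle=\langle w',\Phi(v_1\otimes\cdots\otimes v_n)(z_1+z,\dots,z_n+z)\rangle;$$ (b) for $v_1,\dots,v_n\in V$, $w'\in W'$, $(z_1,\dots,z_n)\in F_n\mathbb C$, $1\le i\le n$ and $z\in\mathbb C$ with $(z_1,\dots,z_{i-1},z_i+z,z_{i+1},\dots,z_n)\in F_n\mathbb C$, the power series expansion in $z$ of $\langle w',\Phi(v_1\otimes\cdots\otimes v_n)(z_1,\dots,z_{i-1},z_i+z,z_{i+1},\dots,z_n)\rangle$ equals the power series $\langle w',\Phi(v_1\otimes\cdots\otimes v_{i-1}\otimes e^{zL_V(-1)}v_i\otimes v_{i+1}\otimes\cdots\otimes v_n)(z_1,\dots,z_n)\rangle$ in $z$; in particular the latter power series converges absolutely to the former function in the disk $|z|<\min_{j\neq k}|z_j-z_k|$.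
   Context: $V$ is a grading-restricted vertex algebra over $\mathbb C$ with vertex operator map $Y_V$, vacuum $\mathbf 1$ and operator $L_V(-1)$ ($L_V(-1)u$ is the coefficient of $x$ in $Y_V(u,x)\mathbf 1$). $W=\coprod_{n\in\mathbb C}W_{(n)}$ is a grading-restricted generalized $V$-module ($W_{(n)}=0$ for $\mathrm{Re}\,n$ sufficiently negative) with vertex operator map $Y_W$ and operators $L_W(0)$, $L_W(-1)$, where $L_W(-1)$ raises weights by $1$. $W'=\coprod_nW_{(n)}^*$, $\overline W=\prod_nW_{(n)}$, $\langle\cdot,\cdot\rangle$ the pairing; $e^{zL_W(-1)}$ is a well-defined operator on $\overline W$. $F_n\mathbb C=\{(z_1,\dots,z_n)\in\mathbb C^n:z_i\ne z_j\ (i\ne j)\}$. $\widetilde W_{z_1,\dots,z_n}$ is the space of maps $f:F_n\mathbb C\to\overline W$ such that $\langle w',f(z_1,\dots,z_n)\rangle$ is a rational function with only possible poles at $z_i=z_j$ ($i\ne j$) for every $w'\in W'$. A linear map $\Phi:V^{\otimes n}\to\widetilde W_{z_1,\dots,z_n}$ has the $L(-1)$-derivative property if (i) $\frac{\partial}{\partial z_i}\langle w',\Phi(v_1\otimes\cdots\otimes v_n)(z_1,\dots,z_n)\rangle=\langle w',\Phi(v_1\otimes\cdots\otimes v_{i-1}\otimes L_V(-1)v_i\otimes v_{i+1}\otimes\cdots\otimes v_n)(z_1,\dots,z_n)\rangle$ for all $i$, $v_j\in V$, $w'\in W'$, and (ii) $\big(\sum_{i=1}^n\frac{\partial}{\partial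 z_i}\big)\langle w',\Phi(v_1\otimes\cdots\otimes v_n)(z_1,\dots,z_n)\rangle=\langle w',L_W(-1)\Phi(v_1\otimes\cdots\otimes v_n)(z_1,\dots,z_n)\rangle$. *)

From Stdlib Require Import Reals ZArith List Arith.
From Stdlib Require Import ClassicalEpsilon.
From Coquelicot Require Import Coquelicot.

Definition is_linear {E F : ModuleSpace C_Ring} (f : E -> F) : Prop :=
  forall (a b : C) (x y : E),
    f (plus (scal a x) (scal b y)) = plus (scal a (f x)) (scal b (f y)).

Definition is_linfun {E : ModuleSpace C_Ring} (f : E -> C) : Prop :=
  forall (a b : C) (x y : E),
    f (plus (scal a x) (scal b y)) = (a * f x + b * f y)%C.

Fixpoint lincomb {E : ModuleSpace C_Ring} (cs : list C) (vs : list E) : E :=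
  match cs, vs with
  | c :: cs', v :: vs' => plus (scal c v) (lincomb cs' vs')
  | _, _ => zero
  end.

Definition fin_dim {E : ModuleSpace C_Ring} (P : E -> Prop) : Prop :=
  exists vs : list E, forall v, P v -> exists cs : list C, v = lincomb cs vs.

Definition lsum {A} {E : AbelianMonoid} (f : A -> E) (l : list A) : E :=
  fold_right (fun a acc => plus (f a) acc) zero (map (fun a => a) l).

(* the (finite) sum of a sequence all of whose terms vanish from some
   index on; this is how infinite sums with finitely many nonzero terms
   (e.g. e^{zL(-1)} acting on \overline W) are evaluated *)
Definition efsum {E : AbelianMonoid} (t : nat -> E) : E :=
  epsilon (inhabits zero)
    (fun x => exists K, (forall k, (K <= k)%nat -> t k = zero) /\ x = sum_n t K).

Definition CZ (k : Z) : C := RtoC (IZR k).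

Fixpoint fallprod (m : Z) (i : nat) : R :=
  match i with
  | O => 1%R
  | S i' => (fallprod m i' * (IZR m - INR i'))%R
  end.
Definition gbinom (m : Z) (i : nat) : C := RtoC (fallprod m i / INR (fact i)).

Definition signN (i : nat) : C := RtoC ((-1) ^ i).
Definition signZ (l : Z) : C := if Z.even l then RtoC 1 else RtoC (-1).

(*   V = coprod_{n in Z} V_(n) is given by the projections projV n      *)
(*   onto V_(n);  YV u k v = u_k v  (Y_V(u,x)v = sum_k u_k v x^{-k-1}). *)

(* L_V(-1)u := coefficient of x in Y_V(u,x)1, i.e. u_{-2} 1 *)
Definition LV1 {V : ModuleSpace C_Ring} (YV : V -> Z -> V -> V) (one : V) (u : V) : V :=
  YV u (-2)%Z one.

Record is_GRVA {V : ModuleSpace C_Ring} (projV : Z -> V -> V)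
    (YV : V -> Z -> V -> V) (one : V) : Prop := {
  va_proj_lin : forall n, is_linear (projV n);
  va_proj_idem : forall n v, projV n (projV n v) = projV n v;
  va_proj_orth : forall m n v, m <> n -> projV m (projV n v) = zero;
  va_proj_decomp : forall v, exists ns : list Z, NoDup ns /\
      (forall m, ~ In m ns -> projV m v = zero) /\ v = lsum (fun n => projV n v) ns;
  va_fin_dim : forall n, fin_dim (fun v => projV n v = v);
  va_lower : exists N : Z, forall n v, (n < N)%Z -> projV n v = zero;
  va_Y_lin_r : forall u k, is_linear (YV u k);
  va_Y_lin_l : forall k v, is_linear (fun u => YV u k v);
  va_Y_trunc : forall u v, exists K : Z, forall k, (K <= k)%Z -> YV u k v = zero;
  va_Y_wt : forall m p k u v, projV m u = u -> projV p v = v ->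
      projV (m + p - k - 1)%Z (YV u k v) = YV u k v;
  va_one_wt : projV 0%Z one = one;
  va_identity : forall k v, YV one k v = if Z.eq_dec k (-1)%Z then v else zero;
  va_creation : forall u k, (0 <= k)%Z -> YV u k one = zero;
  va_creation_lim : forall u, YV u (-1)%Z one = u;
  va_L1_deriv : forall u k v, YV (LV1 YV one u) k v = scal (CZ (- k)) (YV u (k - 1)%Z v);
  va_L1_bracket : forall u k v,
      minus (LV1 YV one (YV u k v)) (YV u k (LV1 YV one v)) = YV (LV1 YV one u) k v;
  (* Jacobi identity, in the form of the Borcherds identity (all sums finite) *)
  va_jacobi : forall u v w (l m n : Z), exists N0 : nat, forall N, (N0 <= N)%nat ->
      sum_n (fun i => scal (gbinom m i)
                 (YV (YV u (l + Z.of_nat i)%Z v) (m + n - Z.of_nat i)%Z w)) N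
    = sum_n (fun i => scal (signN i * gbinom l i)%C
                 (minus (YV u (l + m - Z.of_nat i)%Z (YV v (n + Z.of_nat i)%Z w))
                        (scal (signZ l) (YV v (l + n - Z.of_nat i)%Z (YV u (m + Z.of_nat i)%Z w))))) N
}.

(*   W = coprod_{n in C} W_(n) given by projections projW n;            *)

Record is_GRGModule {V : ModuleSpace C_Ring} (projV : Z -> V -> V)
    (YV : V -> Z -> V -> V) (one : V)
    {W : ModuleSpace C_Ring} (projW : C -> W -> W) (YW : V -> Z -> W -> W)
    (L0W L1W : W -> W) : Prop := {
  md_proj_lin : forall n, is_linear (projW n);
  md_proj_idem : forall n w, projW n (projW n w) = projW n w;
  md_proj_orth : forall m n w, m <> n -> projW m (projW n w) = zero;
  md_proj_decomp : forall w, exists ns : list C, NoDup ns /\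
      (forall m, ~ In m ns -> projW m w = zero) /\ w = lsum (fun n => projW n w) ns;
  md_fin_dim : forall n, fin_dim (fun w => projW n w = w);
  md_lower : exists r : R, forall n w, (Re n < r)%R -> projW n w = zero;
  md_Y_lin_r : forall v k, is_linear (YW v k);
  md_Y_lin_l : forall k w, is_linear (fun v => YW v k w);
  md_Y_trunc : forall v w, exists K : Z, forall k, (K <= k)%Z -> YW v k w = zero;
  md_identity : forall k w, YW one k w = if Z.eq_dec k (-1)%Z then w else zero;
  md_jacobi : forall u v w (l m n : Z), exists N0 : nat, forall N, (N0 <= N)%nat ->
      sum_n (fun i => scal (gbinom m i)
                 (YW (YV u (l + Z.of_nat i)%Z v) (m + n - Z.of_nat i)%Z w)) N
    = sum_n (fun i => scal (signN i * gbinom l i)%C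
                 (minus (YW u (l + m - Z.of_nat i)%Z (YW v (n + Z.of_nat i)%Z w))
                        (scal (signZ l) (YW v (l + n - Z.of_nat i)%Z (YW u (m + Z.of_nat i)%Z w))))) N;
  md_L0_lin : is_linear L0W;
  md_L0_pres : forall n w, projW n w = w -> projW n (L0W w) = L0W w;
  md_L0_geneig : forall n w, projW n w = w ->
      exists K : nat, Nat.iter K (fun x => minus (L0W x) (scal n x)) w = zero;
  md_L0_bracket : forall (m : Z) u k w, projV m u = u ->
      minus (L0W (YW u k w)) (YW u k (L0W w)) = scal (CZ (m - k - 1)) (YW u k w);
  md_L1_lin : is_linear L1W;
  md_L1_wt : forall n w, projW n w = w -> projW (n + 1)%C (L1W w) = L1W w;
  md_L1_deriv : forall u k w, YW (LV1 YV one u) k w = scal (CZ (- k)) (YW u (k - 1)%Z w);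
  md_L1_bracket : forall u k w,
      minus (L1W (YW u k w)) (YW u k (L1W w)) = YW (LV1 YV one u) k w
}.

(* An element of W' = coprod_n W_(n)^*: a linear functional on W that
   vanishes on all W_(m) with m outside a finite set dsupp. *)
Record Wdual {W : ModuleSpace C_Ring} (projW : C -> W -> W) := {
  dfun :> W -> C;
  dsupp : list C;
  dfun_lin : is_linfun dfun;
  dsupp_nodup : NoDup dsupp;
  dsupp_spec : forall m w, ~ In m dsupp -> dfun (projW m w) = 0%C
}.
Arguments dfun {W projW}.
Arguments dsupp {W projW}.

(* \overline W = prod_n W_(n): families f with f n in W_(n) *)
Definition is_Wbar {W : ModuleSpace C_Ring} (projW : C -> W -> W) (f : C -> W) : Prop :=
  forall n, projW n (f n) = f n.

Definition pairing {W : ModuleSpace C_Ring} {projW : C -> W -> W}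
    (w' : Wdual projW) (f : C -> W) : C :=
  lsum (fun n => dfun w' (f n)) (dsupp w').

Definition Lbar {W : ModuleSpace C_Ring} (L1W : W -> W) (f : C -> W) : C -> W :=
  fun m => L1W (f (m - 1)%C).

Definition expLbar {W : ModuleSpace C_Ring} (L1W : W -> W) (z : C) (f : C -> W) : C -> W :=
  fun m => efsum (fun k => scal (Cpow z k / RtoC (INR (fact k)))%C
                               (Nat.iter k L1W (f (m - RtoC (INR k))%C))).

Definition Idx (n : nat) := {i : nat | (i < n)%nat}.

Definition ext {A} {n : nat} (d : A) (f : Idx n -> A) (k : nat) : A :=
  match lt_dec k n with
  | left H => f (exist _ k H)
  | right _ => d
  end.

Definition upd {A} {n : nat} (f : Idx n -> A) (i : Idx n) (a : A) : Idx n -> A :=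
  fun j => if Nat.eq_dec (proj1_sig j) (proj1_sig i) then a else f j.

Definition sumIdx {n : nat} (f : Idx n -> C) : C :=
  fold_right Cplus (RtoC 0) (map (ext (RtoC 0) f) (List.seq 0 n)).

Definition in_Fn {n : nat} (z : Idx n -> C) : Prop :=
  forall i j : Idx n, proj1_sig i <> proj1_sig j -> z i <> z j.

(* polynomials in n variables: lists of (coefficient, exponent vector) *)
Definition mpoly_eval {n : nat} (p : list (C * (Idx n -> nat))) (z : Idx n -> C) : C :=
  fold_right Cplus (RtoC 0)
    (map (fun ce => (fst ce *
        fold_right Cmult (RtoC 1) (map (fun k => Cpow (ext (RtoC 0) z k) (ext 0%nat (snd ce) k))
                                  (List.seq 0 n)))%C) p).

Definition diag_prod {n : nat} (N : nat) (z : Idx n -> C) : C :=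
  fold_right Cmult (RtoC 1)
    (flat_map (fun i => map (fun j => Cpow (ext (RtoC 0) z i - ext (RtoC 0) z j)%C N)
                            (List.seq (S i) (n - S i)))
              (List.seq 0 n)).

Definition rational_diag {n : nat} (g : (Idx n -> C) -> C) : Prop :=
  exists (p : list (C * (Idx n -> nat))) (N : nat),
    forall z, in_Fn z -> g z = (mpoly_eval p z / diag_prod N z)%C.

(* f : F_n C -> \overline W lies in \widetilde W_{z_1,...,z_n}
   (values outside F_n C are irrelevant junk) *)
Definition in_Wtilde {W : ModuleSpace C_Ring} (projW : C -> W -> W) {n : nat}
    (f : (Idx n -> C) -> C -> W) : Prop :=
  (forall z, in_Fn z -> is_Wbar projW (f z)) /\
  (forall w' : Wdual projW, rational_diag (fun z => pairing w' (f z))).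

(* Phi : V^{(x)n} -> \widetilde W, encoded as a multilinear map V^n -> ... *)
Definition multilinear_Phi {V W : ModuleSpace C_Ring} {n : nat}
    (Phi : (Idx n -> V) -> (Idx n -> C) -> C -> W) : Prop :=
  forall (v : Idx n -> V) (i : Idx n) (a b : C) (x y : V) (z : Idx n -> C) (m : C),
    in_Fn z ->
    Phi (upd v i (plus (scal a x) (scal b y))) z m
    = plus (scal a (Phi (upd v i x) z m)) (scal b (Phi (upd v i y) z m)).

Definition L1_derivative_property {V W : ModuleSpace C_Ring}
    (LV : V -> V) (projW : C -> W -> W) (L1W : W -> W) {n : nat}
    (Phi : (Idx n -> V) -> (Idx n -> C) -> C -> W) : Prop :=
  (forall (v : Idx n -> V) (w' : Wdual projW) (z : Idx n -> C) (i : Idx n),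
     in_Fn z ->
     is_derive (K := C_AbsRing) (V := C_NormedModule)
       (fun t => pairing w' (Phi v (upd z i t))) (z i)
       (pairing w' (Phi (upd v i (LV (v i))) z)))
  /\
  (forall (v : Idx n -> V) (w' : Wdual projW) (z : Idx n -> C),
     in_Fn z ->
     forall d : Idx n -> C,
       (forall i, is_derive (K := C_AbsRing) (V := C_NormedModule)
                    (fun t => pairing w' (Phi v (upd z i t))) (z i) (d i)) ->
       sumIdx d = pairing w' (Lbar L1W (Phi v z))).

(** Both parts are Taylor expansions in one complex variable of the rational functions
    [<w', Phi(v)(z)>], whose poles lie on the diagonals, restricted to a complex line.

    For (a) the line is [t |-> (z_1 + t, ..., z_n + t)].  The denominator [prod (z_i - z_j)^N]
    is constant along it, so the restriction is a polynomial in [t]; by the two parts of the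
    L(-1)-derivative property, applied to the functionals [w' o L_W(-1)^k], its k-th
    derivative at [0] is [<w', L_W(-1)^k Phi(v)(z)>].  These vanish for large [k] because
    [w'] has finite support and [W] is bounded below, so the Taylor series is the finite sum
    defining [<w', e^{z L_W(-1)} Phi(v)(z)>].

    For (b) only [z_i] moves.  For [|t| < min |z_j - z_k|] every factor [z_i + t - z_j] stays
    away from [0], so the restriction is a product of a polynomial and of functions
    [1 / (c + t)] with [|c|] at least the radius, hence has an absolutely convergent Taylor
    expansion on that disk; part (i) of the derivative property identifies its k-th
    derivative with the pairing at [L_V(-1)^k v_i]. *)

From Pilot Require Import Defs.
From Stdlib Require Import Reals ZArith List Arith Lia Lra.
From Stdlib Require Import FunctionalExtensionality ClassicalEpsilon FinFun.
From Coquelicot Require Import Coquelicot.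

Notation is_Cseries a l := (is_series (K := C_AbsRing) (V := C_NormedModule) a%C (l : C)%C).
Notation is_Cderive f t l := (is_derive (K := C_AbsRing) (V := C_NormedModule) f%C (t : C)%C (l : C)%C).

Open Scope C_scope.

(* Coquelicot states its summation lemmas with the generic [plus], [mult], [zero];
   [Cring] unfolds them on [C] before calling [ring]. *)
Ltac Cnorm := cbv beta; repeat match goal with
  | |- context [@plus ?G ?x ?y] => change (@plus G x y) with (Cplus x y)
  | |- context [@opp ?G ?x] => change (@opp G x) with (Copp x)
  | |- context [@mult ?G ?x ?y] => change (@mult G x y) with (Cmult x y)
  | |- context [@zero ?G] => change (@zero G) with (RtoC 0)
  end.
Ltac Cring := Cnorm; match goal with |- @eq _ ?x ?y => change (@eq C x y) end; ring.

(** * Complex series *)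

Lemma sum_n_eventually_const {G : AbelianMonoid} (a : nat -> G) (K : nat) :
  (forall k, (K < k)%nat -> a k = zero) ->
  forall m, (K <= m)%nat -> sum_n a m = sum_n a K.
Proof.
  intros H m Hm. induction Hm as [|m Hm IH]; [reflexivity|].
  now rewrite sum_Sn, H, plus_zero_r by lia.
Qed.

Lemma is_series_eventually_zero {K : AbsRing} {V : NormedModule K} (a : nat -> V) (N : nat) :
  (forall k, (N < k)%nat -> a k = zero) -> is_series a (sum_n a N).
Proof.
  intros H. apply filterlim_ext_loc with (fun _ => sum_n a N); [|apply filterlim_const].
  exists N. intros m Hm. symmetry. now apply sum_n_eventually_const.
Qed.

Lemma efsum_eq_sum_n {G : AbelianMonoid} (t : nat -> G) K :
  (forall k, (K < k)%nat -> t k = zero) -> efsum t = sum_n t K.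
Proof.
  intros H. unfold efsum.
  destruct (epsilon_spec (inhabits zero)
    (fun x => exists K0, (forall k, (K0 <= k)%nat -> t k = zero) /\ x = sum_n t K0))
    as [K0 [H0 ->]].
  { exists (sum_n t (S K)), (S K). split; [intros; apply H; lia | reflexivity]. }
  rewrite <- (sum_n_eventually_const t K0) with (m := max K K0) by (intros; try apply H0; lia).
  apply sum_n_eventually_const; [intros; apply H; lia | lia].
Qed.

Lemma is_Cseries_unique (a : nat -> C) (l1 l2 : C) :
  is_Cseries a l1 -> is_Cseries a l2 -> l1 = l2.
Proof.
  exact (@filterlim_locally_unique nat C_AbsRing C_NormedModule eventually
           (Proper_StrongProper _ eventually_filter) (sum_n a) l1 l2).
Qed.

Lemma Re_sum_n (a : nat -> C) n : Re (sum_n a n) = sum_n (fun k => Re (a k)) n.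
Proof.
  induction n; [now rewrite !sum_O|].
  rewrite !sum_Sn, <- IHn. now destruct (sum_n a n), (a (S n)).
Qed.

Lemma Im_sum_n (a : nat -> C) n : Im (sum_n a n) = sum_n (fun k => Im (a k)) n.
Proof.
  induction n; [now rewrite !sum_O|].
  rewrite !sum_Sn, <- IHn. now destruct (sum_n a n), (a (S n)).
Qed.

Lemma is_Cseries_ReIm (a : nat -> C) (l : C) :
  is_Cseries a l <->
  is_series (fun n => Re (a n)) (Re l) /\ is_series (fun n => Im (a n)) (Im l).
Proof.
  unfold is_series. split.
  - intros H; split; apply filterlim_locally; intros eps;
      refine (filter_imp _ _ _ (proj1 (filterlim_locally (U := C_UniformSpace) _ _) H eps));
      intros k [Hr Hi].
    + now rewrite <- Re_sum_n.
    + now rewrite <- Im_sum_n.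
  - intros [Hr Hi]. apply (filterlim_locally (U := C_UniformSpace)). intros eps.
    refine (filter_imp _ _ _ (filter_and _ _ (proj1 (filterlim_locally _ _) Hr eps)
                                             (proj1 (filterlim_locally _ _) Hi eps))).
    intros k [H1 H2]. rewrite <- Re_sum_n in H1. rewrite <- Im_sum_n in H2.
    destruct l; split; assumption.
Qed.

Lemma ex_series_Rabs_le_Cmod (a : nat -> C) (f : C -> R) :
  (forall z, Rabs (f z) <= Cmod z)%R -> ex_series (fun n => Cmod (a n)) ->
  ex_series (fun n => Rabs (f (a n))).
Proof.
  intros Hf. apply (ex_series_le (K := R_AbsRing) (V := R_CompleteNormedModule)).
  intros n. change (Rabs (Rabs (f (a n))) <= Cmod (a n))%R. rewrite Rabs_Rabsolu. apply Hf.
Qed.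

Lemma Im_le_Cmod (z : C) : (Rabs (Im z) <= Cmod z)%R.
Proof.
  destruct z as [x y]. unfold Cmod, Im; simpl.
  rewrite <- sqrt_Rsqr_abs. apply sqrt_le_1_alt. unfold Rsqr. nra.
Qed.

Lemma Cmod_sum_n_le (a : nat -> C) n : (Cmod (sum_n a n) <= sum_n (fun k => Cmod (a k)) n)%R.
Proof.
  induction n; [rewrite !sum_O; lra|].
  rewrite !sum_Sn. eapply Rle_trans; [apply Cmod_triangle|]. change (plus ?x ?y) with (x + y)%R. lra.
Qed.

Definition Cauchy_product (a b : nat -> C) (n : nat) : C :=
  sum_n (fun k => a k * b (n - k)%nat) n.

Lemma sum_n_Rminus (f g : nat -> R) n : sum_n (fun k => f k - g k)%R n = (sum_n f n - sum_n g n)%R.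
Proof. induction n; [now rewrite !sum_O|]. rewrite !sum_Sn, IHn. unfold plus; simpl; ring. Qed.

Lemma is_Cseries_Cauchy_product (a b : nat -> C) la lb :
  is_Cseries a la -> is_Cseries b lb ->
  ex_series (fun n => Cmod (a n)) -> ex_series (fun n => Cmod (b n)) ->
  is_Cseries (Cauchy_product a b) (la * lb) /\ ex_series (fun n => Cmod (Cauchy_product a b n)).
Proof.
  intros Ha Hb Aa Ab.
  apply is_Cseries_ReIm in Ha as [Har Hai]. apply is_Cseries_ReIm in Hb as [Hbr Hbi].
  pose proof (ex_series_Rabs_le_Cmod a Re re_le_Cmod Aa) as Aar.
  pose proof (ex_series_Rabs_le_Cmod a Im Im_le_Cmod Aa) as Aai.
  pose proof (ex_series_Rabs_le_Cmod b Re re_le_Cmod Ab) as Abr.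
  pose proof (ex_series_Rabs_le_Cmod b Im Im_le_Cmod Ab) as Abi.
  split.
  - apply is_Cseries_ReIm. split.
    + eapply is_series_ext;
        [|apply (is_series_minus _ _ _ _ (is_series_mult _ _ _ _ Har Hbr Aar Abr)
                                         (is_series_mult _ _ _ _ Hai Hbi Aai Abi))].
      intros n. unfold Cauchy_product. rewrite Re_sum_n, <- !sum_n_Reals.
      change (plus ?x (opp ?y)) with (x - y)%R. rewrite <- sum_n_Rminus.
      apply sum_n_ext. intros k. destruct (a k), (b (n - k)%nat). simpl. ring.
    + eapply is_series_ext;
        [|apply (is_series_plus _ _ _ _ (is_series_mult _ _ _ _ Har Hbi Aar Abi)
                                        (is_series_mult _ _ _ _ Hai Hbr Aai Abr))].
      intros n. unfold Cauchy_product. rewrite Im_sum_n, <- !sum_n_Reals, <- sum_n_plus.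
      apply sum_n_ext. intros k. destruct (a k), (b (n - k)%nat). unfold plus; simpl. ring.
  - destruct Aa as [sa Hsa], Ab as [sb Hsb].
    assert (Habs : forall u : nat -> C, (fun n => Rabs (Cmod (u n))) = (fun n => Cmod (u n))).
    { intros u. apply functional_extensionality. intros n. apply Rabs_right, Rle_ge, Cmod_ge_0. }
    apply (ex_series_le (K := R_AbsRing) (V := R_CompleteNormedModule)) with
      (fun n => sum_f_R0 (fun k => Cmod (a k) * Cmod (b (n - k)%nat))%R n).
    + intros n. change (Rabs (Cmod (Cauchy_product a b n)) <= sum_f_R0 (fun k => Cmod (a k) * Cmod (b (n - k)%nat)) n)%R.
      rewrite Rabs_right by (apply Rle_ge, Cmod_ge_0).
      rewrite <- sum_n_Reals. eapply Rle_trans; [apply Cmod_sum_n_le|].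
      apply Req_le, sum_n_ext. intros k. apply Cmod_mult.
    + eexists. apply (is_series_mult _ _ _ _ Hsa Hsb).
      * exists sa. now rewrite (Habs a).
      * exists sb. now rewrite (Habs b).
Qed.

(** * Complex derivatives *)

Lemma locally_Cball (x : C) (P : C -> Prop) (d : R) :
  (0 < d)%R -> (forall y : C, (Cmod (y - x) < d)%R -> P y) ->
  locally (T := AbsRing_UniformSpace C_AbsRing) x P.
Proof. intros Hd H. exists (mkposreal d Hd). exact H. Qed.

(* Coquelicot's rules for products and the identity use the other normed-module structure on [C]. *)
Lemma is_Cderive_AbsRing (f : C -> C) t l :
  is_Cderive f t l <-> is_derive (K := C_AbsRing) (V := AbsRing_NormedModule C_AbsRing) f t l.
Proof. split; intros [[] H2]; (split; [split; auto|]); intros x Hx eps; exact (H2 x Hx eps). Qed.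

Lemma is_Cderive_eq (f : C -> C) t l1 l2 : is_Cderive f t l1 -> l1 = l2 -> is_Cderive f t l2.
Proof. now intros H <-. Qed.

Lemma is_Cderive_const (c : C) t : is_Cderive (fun _ => c) t 0.
Proof. exact (is_derive_const (K := C_AbsRing) (V := C_NormedModule) c t). Qed.

Lemma is_Cderive_id t : is_Cderive (fun x => x) t 1.
Proof. apply is_Cderive_AbsRing. exact (is_derive_id (K := C_AbsRing) t). Qed.

Lemma is_Cderive_plus (f g : C -> C) t df dg :
  is_Cderive f t df -> is_Cderive g t dg -> is_Cderive (fun x => f x + g x) t (df + dg).
Proof. apply (is_derive_plus (K := C_AbsRing) (V := C_NormedModule)). Qed.

Lemma is_Cderive_mult (f g : C -> C) t df dg :
  is_Cderive f t df -> is_Cderive g t dg ->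
  is_Cderive (fun x => f x * g x) t (df * g t + f t * dg).
Proof.
  intros Hf Hg. apply is_Cderive_AbsRing.
  exact (is_derive_mult f g t df dg (proj1 (is_Cderive_AbsRing _ _ _) Hf)
           (proj1 (is_Cderive_AbsRing _ _ _) Hg) Cmult_comm).
Qed.

Lemma is_Cderive_comp (f g : C -> C) t df dg :
  is_Cderive f (g t) df -> is_Cderive g t dg -> is_Cderive (fun x => f (g x)) t (dg * df).
Proof.
  intros Hf Hg. exact (is_derive_comp f g t df dg Hf (proj1 (is_Cderive_AbsRing _ _ _) Hg)).
Qed.

Lemma is_Cderive_ext (f g : C -> C) t l :
  (forall x, f x = g x) -> is_Cderive f t l -> is_Cderive g t l.
Proof. apply (is_derive_ext (K := C_AbsRing) (V := C_NormedModule)). Qed.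

Lemma is_Cderive_ext_ball (f g : C -> C) t l (d : R) : (0 < d)%R ->
  (forall x, (Cmod (x - t) < d)%R -> f x = g x) -> is_Cderive f t l -> is_Cderive g t l.
Proof.
  intros Hd H. apply (is_derive_ext_loc (K := C_AbsRing) (V := C_NormedModule)).
  now apply locally_Cball with d.
Qed.

Lemma is_Cderive_unique (f : C -> C) t l1 l2 : is_Cderive f t l1 -> is_Cderive f t l2 -> l1 = l2.
Proof. intros H1%is_C_derive_unique H2%is_C_derive_unique. congruence. Qed.

Lemma is_Cderive_sum_n (g : nat -> C -> C) (dg : nat -> C) k t :
  (forall j, (j <= k)%nat -> is_Cderive (g j) t (dg j)) ->
  is_Cderive (fun x => sum_n (fun j => g j x) k) t (sum_n dg k).
Proof.
  induction k as [|k IH]; intros H.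
  - rewrite sum_O. eapply is_Cderive_ext; [|apply H; lia]. intros x. now rewrite sum_O.
  - rewrite sum_Sn.
    eapply is_Cderive_ext; [|apply is_Cderive_plus; [apply IH; intros; apply H; lia|apply H; lia]].
    intros x. now rewrite sum_Sn.
Qed.

Lemma Cinv_sub_linear (x y : C) : x <> 0 -> y <> 0 ->
  / y - / x - (y - x) * (- / (x * x)) = (y - x) * (y - x) / (x * x * y).
Proof. intros. now field. Qed.

Lemma is_Cderive_Cinv (x : C) : x <> 0 -> is_Cderive (fun t => / t) x (- / (x * x)).
Proof.
  intros Hx. split; [apply is_linear_scal_l|].
  intros y Hy.
  apply (is_filter_lim_locally_unique (K := C_AbsRing) (V := AbsRing_NormedModule C_AbsRing)) in Hy.
  subst y. intros [eps Heps].
  assert (Hm : (0 < Cmod x)%R) by now apply Cmod_gt_0.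
  set (m := Cmod x) in *.
  apply locally_Cball with (Rmin (m / 2) (eps * m ^ 3 / 2))%R.
  { apply Rmin_pos; [lra|]. assert (0 < m ^ 3)%R by (apply pow_lt; lra). nra. }
  intros y Hy.
  assert (Hd1 := Rlt_le_trans _ _ _ Hy (Rmin_l _ _)).
  assert (Hd2 := Rlt_le_trans _ _ _ Hy (Rmin_r _ _)).
  assert (Hy1 : (m / 2 <= Cmod y)%R).
  { assert (Cmod x <= Cmod y + Cmod (y - x))%R.
    { replace x with (y + - (y - x)) at 1 by ring. rewrite <- (Cmod_opp (y - x)). apply Cmod_triangle. }
    unfold m in *. lra. }
  assert (Hy0 : y <> 0) by (intros ->; rewrite Cmod_0 in Hy1; lra).
  change (Cmod (/ y - / x - (y - x) * - / (x * x)) <= eps * Cmod (y - x))%R.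
  rewrite Cinv_sub_linear by assumption.
  unfold Cdiv. rewrite !Cmod_mult, Cmod_inv, !Cmod_mult by (repeat apply Cmult_neq_0; auto).
  fold m. set (d := Cmod (y - x)) in *.
  assert (0 <= d)%R by apply Cmod_ge_0.
  assert (Hpos : (0 < m * m * Cmod y)%R) by (apply Rmult_lt_0_compat; nra).
  apply Rmult_le_reg_r with (m * m * Cmod y)%R; [exact Hpos|].
  rewrite Rmult_assoc, Rinv_l, Rmult_1_r by lra.
  assert (m * m * (m / 2) <= m * m * Cmod y)%R by (apply Rmult_le_compat_l; nra).
  assert (d * (eps * m ^ 3 / 2) = eps * d * (m * m * (m / 2)))%R by (simpl; field).
  assert (eps * d * (m * m * (m / 2)) <= eps * d * (m * m * Cmod y))%R
    by (apply Rmult_le_compat_l; nra).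
  simpl in *. nra.
Qed.

Lemma is_Cderive_inv (f : C -> C) t df : is_Cderive f t df -> f t <> 0 ->
  is_Cderive (fun x => / f x) t (- df / (f t * f t)).
Proof.
  intros H Hn. eapply is_Cderive_eq.
  - exact (is_Cderive_comp (fun x => / x) f t _ _ (is_Cderive_Cinv _ Hn) H).
  - now field.
Qed.

Lemma is_Cderive_translate (F : C -> C) (c l : C) :
  is_Cderive (fun s => F (c + s)) 0 l -> is_Cderive F c l.
Proof.
  intros H. eapply is_Cderive_eq.
  - eapply is_Cderive_ext; [|apply (is_Cderive_comp (fun s => F (c + s)) (fun u => u - c))].
    + intros u. cbv beta. f_equal. ring.
    + replace (c - c) with (RtoC 0) by ring. exact H.
    + eapply is_Cderive_ext; [|apply is_Cderive_plus; [apply is_Cderive_id|apply (is_Cderive_const (- c))]].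
      reflexivity.
  - ring.
Qed.

(** * Functions with a Taylor expansion on a disk *)

Lemma sum_n_shift {G : AbelianMonoid} (g : nat -> G) k :
  sum_n g (S k) = plus (g 0%nat) (sum_n (fun j => g (S j)) k).
Proof. unfold sum_n. rewrite sum_Sn_m, sum_n_m_S by lia. reflexivity. Qed.

(* [c k] plays the role of the normalised derivative f^(k)/k!. *)
Definition taylor_on_disk (rho : R) (f : C -> C) : Prop :=
  exists c : nat -> C -> C,
    (forall t, (Cmod t < rho)%R -> c 0%nat t = f t) /\
    (forall k t, (Cmod t < rho)%R -> is_Cderive (c k) t (INR (S k) * c (S k) t)) /\
    (forall t, (Cmod t < rho)%R ->
       ex_series (fun k => Cmod (c k 0 * t ^ k)) /\ is_Cseries (fun k => c k 0 * t ^ k) (f t)).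

Section TaylorOnDisk.
Variable rho : R.

Lemma taylor_on_disk_ext (f g : C -> C) :
  (forall t, (Cmod t < rho)%R -> f t = g t) -> taylor_on_disk rho f -> taylor_on_disk rho g.
Proof.
  intros E [c [H0 [H1 H2]]]. exists c. split; [|split]; [| exact H1 |].
  - intros t Ht. rewrite <- E; auto.
  - intros t Ht. destruct (H2 t Ht) as [A B]. rewrite <- E; auto.
Qed.

Lemma taylor_on_disk_const (a : C) : taylor_on_disk rho (fun _ => a).
Proof.
  exists (fun k _ => match k with O => a | _ => 0 end). split; [|split].
  - reflexivity.
  - intros k t _. eapply is_Cderive_eq; [apply is_Cderive_const|]. destruct k; simpl; ring.
  - intros t _. set (c := fun k => (match k with O => a | _ => 0 end) * t ^ k). split.
    + exists (sum_n (fun k => Cmod (c k)) 0).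
      apply (is_series_eventually_zero (K := R_AbsRing) (V := R_NormedModule)).
      intros [|k] Hk; [lia|]. unfold c. rewrite Cmult_0_l. apply Cmod_0.
    + replace a with (sum_n c 0) by (rewrite sum_O; unfold c; simpl; ring).
      apply (is_series_eventually_zero (K := C_AbsRing) (V := C_NormedModule)). intros [|k] Hk; [lia|]. unfold c. simpl. Cring.
Qed.

Lemma taylor_on_disk_translate (a : C) : taylor_on_disk rho (fun t => a + t).
Proof.
  exists (fun k t => match k with O => a + t | 1%nat => 1 | _ => 0 end). split; [|split].
  - reflexivity.
  - intros [|[|k]] t _.
    + eapply is_Cderive_eq; [apply is_Cderive_plus; [apply is_Cderive_const|apply is_Cderive_id]|].
      simpl. ring.
    + eapply is_Cderive_eq; [apply is_Cderive_const|]. simpl. ring.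
    + eapply is_Cderive_eq; [apply is_Cderive_const|]. simpl. ring.
  - intros t _. set (c := fun k => (match k with O => a + 0 | 1%nat => 1 | _ => 0 end) * t ^ k).
    split.
    + exists (sum_n (fun k => Cmod (c k)) 1).
      apply (is_series_eventually_zero (K := R_AbsRing) (V := R_NormedModule)). intros [|[|k]] Hk; try lia.
      unfold c. rewrite Cmult_0_l. apply Cmod_0.
    + replace (a + t) with (sum_n c 1) by (rewrite sum_Sn, sum_O; unfold c; simpl; Cring).
      apply (is_series_eventually_zero (K := C_AbsRing) (V := C_NormedModule)). intros [|[|k]] Hk; try lia. unfold c. simpl. Cring.
Qed.

Lemma taylor_on_disk_plus (f g : C -> C) :
  taylor_on_disk rho f -> taylor_on_disk rho g -> taylor_on_disk rho (fun t => f t + g t).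
Proof.
  intros [a [Ha0 [Ha1 Ha2]]] [b [Hb0 [Hb1 Hb2]]].
  exists (fun k t => a k t + b k t). split; [|split].
  - intros t Ht. rewrite Ha0, Hb0; auto.
  - intros k t Ht. eapply is_Cderive_eq; [apply is_Cderive_plus; auto|]. ring.
  - intros t Ht. destruct (Ha2 t Ht) as [A1 A2], (Hb2 t Ht) as [B1 B2]. split.
    + apply (ex_series_le (K := R_AbsRing) (V := R_CompleteNormedModule)) with
        (fun k => Cmod (a k 0 * t ^ k) + Cmod (b k 0 * t ^ k))%R.
      * intros k. change (Rabs (Cmod ((a k 0 + b k 0) * t ^ k))
                            <= Cmod (a k 0 * t ^ k) + Cmod (b k 0 * t ^ k))%R.
        rewrite Rabs_right by apply Rle_ge, Cmod_ge_0.
        rewrite Cmult_plus_distr_r. apply Cmod_triangle.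
      * now apply (ex_series_plus (K := R_AbsRing) (V := R_NormedModule)).
    + eapply is_series_ext; [|exact (is_series_plus _ _ _ _ A2 B2)]. intros k. Cring.
Qed.

Lemma Cauchy_product_derive_coef (A B : nat -> C) k :
  sum_n (fun j => INR (S j) * A (S j) * B (k - j)%nat
                  + A j * (INR (S (k - j)) * B (S (k - j)))) k
  = INR (S k) * sum_n (fun j => A j * B (S k - j)%nat) (S k).
Proof.
  set (X := fun j => INR j * A j * B (S k - j)%nat).
  set (Y := fun j => INR (S k - j) * A j * B (S k - j)%nat).
  assert (E1 : sum_n (fun j => INR (S j) * A (S j) * B (k - j)%nat) k = sum_n X (S k)).
  { rewrite sum_n_shift. unfold X at 1. simpl (INR 0).
    rewrite Cmult_0_l, Cmult_0_l. change (plus ?x ?y) with (x + y). rewrite Cplus_0_l.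
    apply sum_n_ext. reflexivity. }
  assert (E2 : sum_n (fun j => A j * (INR (S (k - j)) * B (S (k - j)))) k = sum_n Y (S k)).
  { rewrite sum_Sn. unfold Y at 2. rewrite Nat.sub_diag. simpl (INR 0).
    rewrite Cmult_0_l, Cmult_0_l. change (plus ?x ?y) with (x + y). rewrite Cplus_0_r.
    apply sum_n_ext_loc. intros j Hj. unfold Y. replace (S (k - j)) with (S k - j)%nat by lia.
    Cring. }
  rewrite (sum_n_plus (G := C_AbelianMonoid)). change (plus ?x ?y) with (x + y).
  rewrite E1, E2, <- (sum_n_plus (G := C_AbelianMonoid)).
  rewrite <- (sum_n_mult_l (K := C_Ring)).
  apply sum_n_ext_loc. intros j Hj. unfold X, Y.
  rewrite minus_INR, RtoC_minus by lia. Cring.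
Qed.

Lemma taylor_on_disk_mult (f g : C -> C) :
  taylor_on_disk rho f -> taylor_on_disk rho g -> taylor_on_disk rho (fun t => f t * g t).
Proof.
  intros [a [Ha0 [Ha1 Ha2]]] [b [Hb0 [Hb1 Hb2]]].
  exists (fun k t => Cauchy_product (fun j => a j t) (fun j => b j t) k). split; [|split].
  - intros t Ht. unfold Cauchy_product. rewrite sum_O. simpl. rewrite Ha0, Hb0; auto.
  - intros k t Ht. eapply is_Cderive_eq; [apply is_Cderive_sum_n|].
    + intros j Hj. apply is_Cderive_mult; auto.
    + apply (Cauchy_product_derive_coef (fun j => a j t) (fun j => b j t)).
  - intros t Ht. destruct (Ha2 t Ht) as [A1 A2], (Hb2 t Ht) as [B1 B2].
    destruct (is_Cseries_Cauchy_product _ _ _ _ A2 B2 A1 B1) as [P1 P2].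
    assert (E : forall k, Cauchy_product (fun j => a j 0) (fun j => b j 0) k * t ^ k
                  = Cauchy_product (fun j => a j 0 * t ^ j) (fun j => b j 0 * t ^ j) k).
    { intros k. unfold Cauchy_product. rewrite Cmult_comm, <- (sum_n_mult_l (K := C_Ring)).
      apply sum_n_ext_loc. intros j Hj.
      replace (t ^ k) with (t ^ j * t ^ (k - j)%nat) by (rewrite <- Cpow_add_r; f_equal; lia).
      Cring. }
    split.
    + eapply ex_series_ext; [|exact P2]. intros k. now rewrite E.
    + eapply is_series_ext; [|exact P1]. intros k. now rewrite E.
Qed.

Lemma taylor_on_disk_pow (f : C -> C) m :
  taylor_on_disk rho f -> taylor_on_disk rho (fun t => f t ^ m).
Proof.
  intros H. induction m as [|m IH]; [exact (taylor_on_disk_const 1)|].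
  exact (taylor_on_disk_mult f (fun t => f t ^ m) H IH).
Qed.

Lemma taylor_on_disk_fold_plus {A} (l : list A) (F : A -> C -> C) :
  (forall a, In a l -> taylor_on_disk rho (F a)) ->
  taylor_on_disk rho (fun t => fold_right Cplus 0 (map (fun a => F a t) l)).
Proof.
  induction l as [|a l IH]; intros H; [exact (taylor_on_disk_const 0)|].
  apply (taylor_on_disk_plus (F a)); [apply H; now left|].
  apply IH. intros; apply H; now right.
Qed.

Lemma taylor_on_disk_fold_mult {A} (l : list A) (F : A -> C -> C) :
  (forall a, In a l -> taylor_on_disk rho (F a)) ->
  taylor_on_disk rho (fun t => fold_right Cmult 1 (map (fun a => F a t) l)).
Proof.
  induction l as [|a l IH]; intros H; [exact (taylor_on_disk_const 1)|].
  apply (taylor_on_disk_mult (F a)); [apply H; now left|].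
  apply IH. intros; apply H; now right.
Qed.

Lemma is_Cderive_inv_translate_pow (c : C) m t : c + t <> 0 ->
  is_Cderive (fun x => (/ (c + x)) ^ m) t (- INR m * (/ (c + t)) ^ (S m)).
Proof.
  intros Hn. induction m as [|m IH].
  - eapply is_Cderive_eq; [apply (is_Cderive_const 1)|]. simpl. ring.
  - assert (Hu : is_Cderive (fun x => / (c + x)) t (- (0 + 1) / ((c + t) * (c + t)))).
    { apply (is_Cderive_inv (fun x => c + x)); [|exact Hn].
      apply is_Cderive_plus; [apply is_Cderive_const|apply is_Cderive_id]. }
    eapply is_Cderive_eq; [exact (is_Cderive_mult _ _ _ _ _ Hu IH)|].
    rewrite S_INR, RtoC_plus. simpl. now field.
Qed.

Lemma geometric_partial_sum (q : C) n :
  q <> 1 -> sum_n (fun k => q ^ k) n = (1 - q ^ (S n)) / (1 - q).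
Proof.
  intros Hq. assert (1 - q <> 0) by (intros E; apply Hq; replace q with (1 - (1 - q)) by ring; rewrite E; ring).
  induction n as [|n IH].
  - rewrite sum_O. simpl. now field.
  - rewrite sum_Sn, IH. change (plus ?x ?y) with (x + y). simpl. now field.
Qed.

Lemma is_Cseries_geom (q : C) : (Cmod q < 1)%R ->
  is_Cseries (fun k => q ^ k) (/ (1 - q)) /\ ex_series (fun k => Cmod (q ^ k)).
Proof.
  intros Hq. assert (Hq1 : q <> 1) by (intros ->; rewrite Cmod_1 in Hq; lra).
  assert (H1 : 1 - q <> 0) by (intros E; apply Hq1; replace q with (1 - (1 - q)) by ring; rewrite E; ring).
  assert (Hm : (0 < Cmod (1 - q))%R) by now apply Cmod_gt_0.
  assert (Hq' : (Rabs (Cmod q) < 1)%R) by (rewrite Rabs_right; [lra|apply Rle_ge, Cmod_ge_0]).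
  split.
  - apply (filterlim_locally_ball_norm (K := C_AbsRing) (U := C_NormedModule)).
    intros [eps He].
    destruct (pow_lt_1_zero _ Hq' (eps * Cmod (1 - q))%R ltac:(nra)) as [N HN].
    exists N. intros n Hn.
    change (Cmod (sum_n (fun k => q ^ k) n - / (1 - q))%C < eps)%R.
    rewrite geometric_partial_sum by exact Hq1.
    replace ((1 - q ^ S n) / (1 - q) - / (1 - q)) with (- q ^ S n / (1 - q)) by now field.
    unfold Cdiv. rewrite Cmod_mult, Cmod_inv, Cmod_opp, Cmod_pow by exact H1.
    specialize (HN (S n) ltac:(lia)).
    rewrite Rabs_right in HN by apply Rle_ge, pow_le, Cmod_ge_0.
    apply Rmult_lt_reg_r with (Cmod (1 - q)); [exact Hm|].
    rewrite Rmult_assoc, Rinv_l, Rmult_1_r by lra. lra.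
  - exists (/ (1 - Cmod q))%R. eapply is_series_ext; [|now apply is_series_geom].
    intros k. now rewrite Cmod_pow.
Qed.

Lemma taylor_on_disk_inv_translate (c : C) :
  (rho <= Cmod c)%R -> taylor_on_disk rho (fun t => / (c + t)).
Proof.
  intros Hc.
  assert (Hnz : forall t, (Cmod t < rho)%R -> c + t <> 0).
  { intros t Ht E. replace t with (- c) in Ht by (replace t with (c + t - c) by ring; rewrite E; ring).
    rewrite Cmod_opp in Ht. lra. }
  assert (Hc0 : (Cmod 0 < rho)%R -> c <> 0).
  { intros H0. rewrite <- (Cplus_0_r c). now apply Hnz. }
  exists (fun k t => (RtoC (-1)) ^ k * (/ (c + t)) ^ (S k)). split; [|split].
  - intros t Ht. simpl. ring.
  - intros k t Ht. eapply is_Cderive_eq.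
    + apply is_Cderive_mult; [apply is_Cderive_const|exact (is_Cderive_inv_translate_pow c (S k) t (Hnz t Ht))].
    + rewrite !Cpow_S. ring.
  - intros t Ht.
    assert (Hc0' : c <> 0) by (apply Hc0; rewrite Cmod_0; pose proof (Cmod_ge_0 t); lra).
    assert (Hq : (Cmod (- t / c) < 1)%R).
    { unfold Cdiv. rewrite Cmod_mult, Cmod_opp, Cmod_inv by exact Hc0'.
      assert (0 < Cmod c)%R by now apply Cmod_gt_0.
      apply Rmult_lt_reg_r with (Cmod c); [assumption|].
      rewrite Rmult_assoc, Rinv_l by lra. lra. }
    destruct (is_Cseries_geom _ Hq) as [G1 G2].
    assert (E : forall k, (RtoC (-1)) ^ k * (/ (c + 0)) ^ (S k) * t ^ k = / c * (- t / c) ^ k).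
    { intros k. rewrite Cplus_0_r. simpl.
      replace (- t / c) with (RtoC (-1) * / c * t) by now field.
      rewrite !Cpow_mult_l. ring. }
    split.
    + apply ex_series_ext with (fun k => Cmod (/ c) * Cmod ((- t / c) ^ k))%R.
      * intros k. now rewrite E, Cmod_mult.
      * now apply (ex_series_scal_l (K := R_AbsRing) (V := R_NormedModule)).
    + eapply is_series_ext; [intros k; symmetry; apply E|].
      replace (/ (c + t)) with (/ c * / (1 - - t / c)) by (field; split; auto).
      now apply (is_series_scal_l (K := C_AbsRing) (V := C_NormedModule)).
Qed.

Lemma taylor_coefficients_from_derivatives (f : C -> C) (H : nat -> C -> C) :
  taylor_on_disk rho f -> (forall t, (Cmod t < rho)%R -> H 0%nat t = f t) ->
  (forall k t, (Cmod t < rho)%R -> is_Cderive (H k) t (H (S k) t)) ->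
  forall t, (Cmod t < rho)%R ->
    ex_series (fun k => Cmod (/ INR (fact k) * H k 0 * t ^ k)) /\
    is_Cseries (fun k => / INR (fact k) * H k 0 * t ^ k) (f t).
Proof.
  intros [c [Hc0 [Hc1 Hc2]]] H0 H1.
  assert (Hid : forall k t, (Cmod t < rho)%R -> H k t = INR (fact k) * c k t).
  { induction k as [|k IH]; intros t Ht.
    - simpl. rewrite H0, Hc0 by exact Ht. ring.
    - assert (D : is_Cderive (H k) t (INR (fact k) * (INR (S k) * c (S k) t))).
      { apply is_Cderive_ext_ball with (fun x => INR (fact k) * c k x) (rho - Cmod t)%R; [lra| |].
        - intros x Hx. symmetry. apply IH.
          replace x with (t + (x - t)) by ring. eapply Rle_lt_trans; [apply Cmod_triangle|lra].
        - eapply is_Cderive_eq; [apply is_Cderive_mult; [apply is_Cderive_const|now apply Hc1]|].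
          cbv beta. ring. }
      rewrite (is_Cderive_unique _ _ _ _ (H1 k t Ht) D), fact_simpl, mult_INR, RtoC_mult. ring. }
  intros t Ht.
  assert (H00 : (Cmod 0 < rho)%R) by (rewrite Cmod_0; pose proof (Cmod_ge_0 t); lra).
  assert (E : forall k, / INR (fact k) * H k 0 * t ^ k = c k 0 * t ^ k).
  { intros k. rewrite Hid by exact H00. field. intros E%RtoC_inj. exact (INR_fact_neq_0 k E). }
  destruct (Hc2 t Ht) as [A B]. split.
  - eapply ex_series_ext; [|exact A]. intros k. now rewrite E.
  - eapply is_series_ext; [|exact B]. intros k. now rewrite E.
Qed.

End TaylorOnDisk.

Lemma Idx_eq {n} (i j : Idx n) : proj1_sig i = proj1_sig j -> i = j.
Proof.
  destruct i as [i Hi], j as [j Hj]. simpl. intros <-. f_equal. apply Peano_dec.le_unique.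
Qed.

Lemma upd_eq {A n} (f : Idx n -> A) i a : upd f i a i = a.
Proof. unfold upd. destruct Nat.eq_dec; congruence. Qed.

Lemma upd_neq {A n} (f : Idx n -> A) i a j : proj1_sig j <> proj1_sig i -> upd f i a j = f j.
Proof. unfold upd. destruct Nat.eq_dec; congruence. Qed.

Lemma upd_id {A n} (f : Idx n -> A) i : upd f i (f i) = f.
Proof.
  apply functional_extensionality. intros j. unfold upd.
  destruct Nat.eq_dec as [E|]; [f_equal; now apply Idx_eq|reflexivity].
Qed.

Lemma upd_upd {A n} (f : Idx n -> A) i a b : upd (upd f i a) i b = upd f i b.
Proof. apply functional_extensionality. intros j. unfold upd. now destruct Nat.eq_dec. Qed.

Lemma ext_lt {A n} (d : A) (f : Idx n -> A) k (H : (k < n)%nat) : ext d f k = f (exist _ k H).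
Proof. unfold ext. destruct lt_dec; [f_equal; now apply Idx_eq|lia]. Qed.

Lemma ext_ge {A n} (d : A) (f : Idx n -> A) k : (n <= k)%nat -> ext d f k = d.
Proof. intros H. unfold ext. destruct lt_dec; [lia|reflexivity]. Qed.

Lemma fold_Cplus_map_plus {A} (f g : A -> C) l :
  fold_right Cplus 0 (map (fun a => f a + g a) l)
  = fold_right Cplus 0 (map f l) + fold_right Cplus 0 (map g l).
Proof. induction l as [|a l IH]; simpl; [ring|]. rewrite IH. ring. Qed.

Lemma fold_Cplus_map_mult_l {A} (c : C) (f : A -> C) l :
  fold_right Cplus 0 (map (fun a => c * f a) l) = c * fold_right Cplus 0 (map f l).
Proof. induction l as [|a l IH]; simpl; [ring|]. rewrite IH. ring. Qed.

Lemma fold_Cplus_map_zero {A} (f : A -> C) l :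
  (forall a, In a l -> f a = 0) -> fold_right Cplus 0 (map f l) = 0.
Proof. induction l as [|a l IH]; simpl; intros H; [reflexivity|]. rewrite H, IH by auto. ring. Qed.

Lemma fold_Cplus_map_sum_n {A} (G : A -> nat -> C) l K :
  fold_right Cplus 0 (map (fun a => sum_n (G a) K) l)
  = sum_n (fun k => fold_right Cplus 0 (map (fun a => G a k) l)) K.
Proof.
  induction l as [|a l IH]; cbn [map fold_right].
  - symmetry. exact (sum_n_m_const_zero (G := C_AbelianMonoid) 0 K).
  - rewrite IH. symmetry. exact (sum_n_plus (G := C_AbelianMonoid) _ _ K).
Qed.

Lemma fold_Cplus_app (l1 l2 : list C) :
  fold_right Cplus 0 (l1 ++ l2) = fold_right Cplus 0 l1 + fold_right Cplus 0 l2.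
Proof. induction l1 as [|a l1 IH]; simpl; [ring|]. rewrite IH. ring. Qed.

Lemma fold_Cplus_indicator_seq (k m : nat) :
  fold_right Cplus 0 (map (fun j => if Nat.eq_dec j k then RtoC 1 else RtoC 0) (seq 0 m))
  = if lt_dec k m then RtoC 1 else RtoC 0.
Proof.
  induction m as [|m IH]; [reflexivity|].
  rewrite seq_S, map_app, fold_Cplus_app, IH. simpl.
  destruct (Nat.eq_dec m k), (lt_dec k m), (lt_dec k (S m)); try lia; ring.
Qed.

Lemma sumIdx_plus {n} (f g : Idx n -> C) : sumIdx (fun i => f i + g i) = sumIdx f + sumIdx g.
Proof.
  unfold sumIdx. rewrite <- fold_Cplus_map_plus. f_equal. apply map_ext_in.
  intros k Hk%in_seq. assert (Hk' : (k < n)%nat) by lia. now rewrite !(ext_lt _ _ k Hk').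
Qed.

Lemma sumIdx_mult_l {n} (c : C) (f : Idx n -> C) : sumIdx (fun i => c * f i) = c * sumIdx f.
Proof.
  unfold sumIdx. rewrite <- fold_Cplus_map_mult_l. f_equal. apply map_ext_in.
  intros k Hk%in_seq. assert (Hk' : (k < n)%nat) by lia. now rewrite !(ext_lt _ _ k Hk').
Qed.

Lemma sumIdx_zero {n} : sumIdx (fun _ : Idx n => RtoC 0) = 0.
Proof.
  apply fold_Cplus_map_zero. intros k _. unfold ext. now destruct lt_dec.
Qed.

Lemma sumIdx_indicator {n} k : (k < n)%nat ->
  sumIdx (fun i : Idx n => if Nat.eq_dec (proj1_sig i) k then RtoC 1 else RtoC 0) = 1.
Proof.
  intros Hk. unfold sumIdx.
  rewrite (map_ext_in _ (fun j => if Nat.eq_dec j k then RtoC 1 else RtoC 0)).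
  - rewrite fold_Cplus_indicator_seq. now destruct lt_dec.
  - intros j Hj%in_seq. assert (Hj' : (j < n)%nat) by lia. now rewrite (ext_lt _ _ j Hj').
Qed.

Lemma list_lower_bound_gt {A} (l : list A) (g : A -> R) (c : R) :
  (forall a, In a l -> (c < g a)%R) -> exists r, (c < r)%R /\ forall a, In a l -> (r <= g a)%R.
Proof.
  induction l as [|a l IH]; intros H.
  - exists (c + 1)%R. split; [lra|]. intros _ [].
  - destruct IH as [r [Hr Hl]]; [intros; apply H; now right|].
    exists (Rmin r (g a)). split; [apply Rmin_glb_lt; auto; apply H; now left|].
    intros b [<-|Hb]; [apply Rmin_r|]. eapply Rle_trans; [apply Rmin_l|auto].
Qed.

Lemma in_Fn_translate {n} (w : Idx n -> C) t : in_Fn w -> in_Fn (fun j => w j + t).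
Proof.
  intros Hw j k Hjk E. apply (Hw j k Hjk).
  replace (w j) with (w j + t - t) by ring. rewrite E. ring.
Qed.

Lemma in_Fn_upd_nearby {n} (w : Idx n -> C) (i : Idx n) : in_Fn w ->
  exists d, (0 < d)%R /\ forall s, (Cmod (s - w i) < d)%R -> in_Fn (upd w i s).
Proof.
  intros Hw.
  destruct (list_lower_bound_gt (seq 0 n)
              (fun j => if Nat.eq_dec j (proj1_sig i) then 1%R else Cmod (ext (RtoC 0) w j - w i)) 0)
    as [d [Hd Hl]].
  { intros j Hj%in_seq. destruct Nat.eq_dec; [lra|]. apply Cmod_gt_0.
    assert (Hj' : (j < n)%nat) by lia. rewrite (ext_lt _ _ j Hj').
    intros E. apply (Hw (exist _ j Hj') i); [simpl; auto|].
    replace (w (exist _ j Hj')) with (w (exist _ j Hj') - w i + w i) by ring. rewrite E. ring. }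
  exists d. split; [exact Hd|]. intros s Hs.
  assert (Hfar : forall k, proj1_sig k <> proj1_sig i -> s <> w k).
  { intros [k Hk] Hki E. simpl in Hki. specialize (Hl k ltac:(apply in_seq; lia)).
    destruct Nat.eq_dec; [congruence|]. rewrite (ext_lt _ _ k Hk), <- E in Hl. lra. }
  intros j k Hjk. unfold upd.
  destruct (Nat.eq_dec (proj1_sig j) (proj1_sig i)), (Nat.eq_dec (proj1_sig k) (proj1_sig i));
    try lia; auto.
  intros E. apply (Hfar j); auto.
Qed.

Lemma diag_prod_translate {n} N (w : Idx n -> C) t : diag_prod N (fun j => w j + t) = diag_prod N w.
Proof.
  unfold diag_prod. rewrite !flat_map_concat_map. do 2 f_equal. apply map_ext_in.
  intros a Ha%in_seq.
  apply map_ext_in. intros b Hb%in_seq.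
  assert (Ha' : (a < n)%nat) by lia. assert (Hb' : (b < n)%nat) by lia.
  rewrite !(ext_lt _ _ a Ha'), !(ext_lt _ _ b Hb'). f_equal. ring.
Qed.

Lemma fold_Cmult_neq_0 (l : list C) : (forall x, In x l -> x <> 0) -> fold_right Cmult 1 l <> 0.
Proof.
  induction l as [|a l IH]; simpl; intros H.
  - intros E%RtoC_inj. lra.
  - apply Cmult_neq_0; auto.
Qed.

Lemma diag_prod_neq_0 {n} (N : nat) (w : Idx n -> C) : in_Fn w -> diag_prod N w <> 0.
Proof.
  intros Hw. apply fold_Cmult_neq_0. intros x Hx.
  apply in_flat_map in Hx as [a [Ha%in_seq Hx]]. apply in_map_iff in Hx as [b [<- Hb%in_seq]].
  apply Cpow_nz. assert (Ha' : (a < n)%nat) by lia. assert (Hb' : (b < n)%nat) by lia.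
  rewrite (ext_lt _ _ a Ha'), (ext_lt _ _ b Hb'). intros E.
  apply (Hw (exist _ a Ha') (exist _ b Hb')); [simpl; lia|].
  replace (w (exist _ a Ha')) with (w (exist _ a Ha') - w (exist _ b Hb') + w (exist _ b Hb'))
    by ring.
  rewrite E. ring.
Qed.

Lemma fold_Cmult_flat_map {A B} (f : A -> list B) (g : B -> C) (l : list A) :
  fold_right Cmult 1 (map g (flat_map f l))
  = fold_right Cmult 1 (map (fun a => fold_right Cmult 1 (map g (f a))) l).
Proof.
  induction l as [|a l IH]; [reflexivity|]. simpl. rewrite map_app, <- IH.
  generalize (map g (f a)). intros l1. induction l1 as [|x l1 IH1]; simpl; [ring|].
  rewrite IH1. ring.
Qed.

(* With Coquelicot's convention [/ 0 = 0], inversion is multiplicative without side conditions. *)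
Lemma Cinv_mult_total (x y : C) : / (x * y) = / x * / y.
Proof.
  assert (Cinv0 : / RtoC 0 = 0) by (apply injective_projections; simpl; unfold Rdiv; ring).
  destruct (Ceq_dec x 0) as [->|Hx]; [rewrite Cmult_0_l, Cinv0; ring|].
  destruct (Ceq_dec y 0) as [->|Hy]; [rewrite Cmult_0_r, Cinv0; ring|].
  now field.
Qed.

Lemma Cinv_pow_total (x : C) m : / (x ^ m) = (/ x) ^ m.
Proof.
  induction m as [|m IH]; simpl; [now field|]. now rewrite Cinv_mult_total, IH.
Qed.

Lemma Cinv_fold_Cmult (l : list C) : / fold_right Cmult 1 l = fold_right Cmult 1 (map Cinv l).
Proof.
  induction l as [|a l IH]; simpl; [now field|]. now rewrite Cinv_mult_total, IH.
Qed.

(** * Rational functions with diagonal poles *)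

Section RationalAlongCurve.
Variables (rho : R) (n : nat) (w : C -> Idx n -> C).
Hypothesis taylor_coord : forall j, taylor_on_disk rho (fun t => w t j).

Lemma taylor_on_disk_ext_coord k : taylor_on_disk rho (fun t => ext (RtoC 0) (w t) k).
Proof.
  destruct (lt_dec k n) as [Hk|Hk].
  - eapply taylor_on_disk_ext; [|apply (taylor_coord (exist _ k Hk))].
    intros t _. now rewrite (ext_lt _ _ k Hk).
  - eapply taylor_on_disk_ext; [|apply (taylor_on_disk_const rho 0)].
    intros t _. rewrite ext_ge; [reflexivity|lia].
Qed.

Lemma taylor_on_disk_mpoly_eval (p : list (C * (Idx n -> nat))) :
  taylor_on_disk rho (fun t => mpoly_eval p (w t)).
Proof.
  apply (taylor_on_disk_fold_plus rho p (fun ce t => fst ce * fold_right Cmult 1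
    (map (fun k => Cpow (ext (RtoC 0) (w t) k) (ext 0%nat (snd ce) k)) (seq 0 n)))).
  intros ce _. apply (taylor_on_disk_mult rho (fun _ => fst ce)); [apply taylor_on_disk_const|].
  apply (taylor_on_disk_fold_mult rho (seq 0 n)
           (fun k t => Cpow (ext (RtoC 0) (w t) k) (ext 0%nat (snd ce) k))).
  intros k _. apply (taylor_on_disk_pow rho (fun t => ext (RtoC 0) (w t) k)).
  apply taylor_on_disk_ext_coord.
Qed.

Hypothesis taylor_inv_diff : forall a b : Idx n, (proj1_sig a < proj1_sig b)%nat ->
  taylor_on_disk rho (fun t => / (w t a - w t b)).

Lemma taylor_on_disk_inv_diag_prod (N : nat) : taylor_on_disk rho (fun t => / diag_prod N (w t)).
Proof.
  set (g := fun t a b => (/ (ext (RtoC 0) (w t) a - ext (RtoC 0) (w t) b)) ^ N).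
  apply (taylor_on_disk_ext rho (fun t => fold_right Cmult 1
           (map (fun a => fold_right Cmult 1 (map (g t a) (seq (S a) (n - S a)))) (seq 0 n)))).
  { intros t _. unfold diag_prod. rewrite Cinv_fold_Cmult, fold_Cmult_flat_map.
    symmetry. f_equal. apply map_ext.
    intros a. f_equal. rewrite map_map. apply map_ext. intros b. apply Cinv_pow_total. }
  apply taylor_on_disk_fold_mult. intros a Ha%in_seq.
  apply taylor_on_disk_fold_mult. intros b Hb%in_seq.
  apply (taylor_on_disk_pow rho (fun t => / (ext (RtoC 0) (w t) a - ext (RtoC 0) (w t) b))).
  assert (Ha' : (a < n)%nat) by lia. assert (Hb' : (b < n)%nat) by lia.
  eapply taylor_on_disk_ext; [|apply (taylor_inv_diff (exist _ a Ha') (exist _ b Hb')); simpl; lia].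
  intros t _. now rewrite (ext_lt _ _ a Ha'), (ext_lt _ _ b Hb').
Qed.

Lemma taylor_on_disk_rational_diag (F : (Idx n -> C) -> C) :
  rational_diag F -> (forall t, (Cmod t < rho)%R -> in_Fn (w t)) ->
  taylor_on_disk rho (fun t => F (w t)).
Proof.
  intros [p [N HF]] Hw.
  apply (taylor_on_disk_ext rho (fun t => mpoly_eval p (w t) * / diag_prod N (w t))).
  - intros t Ht. now rewrite HF by auto.
  - apply taylor_on_disk_mult; [apply taylor_on_disk_mpoly_eval|apply taylor_on_disk_inv_diag_prod].
Qed.

End RationalAlongCurve.

Definition diagonal_chain_rule {n} (G : (Idx n -> C) -> C) : Prop :=
  exists dG : Idx n -> (Idx n -> C) -> C,
    forall w, (forall i, is_Cderive (fun s => G (upd w i s)) (w i) (dG i w)) /\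
              is_Cderive (fun t => G (fun j => w j + t)) 0 (sumIdx (fun i => dG i w)).

Section DiagonalChainRule.
Variable n : nat.

Lemma translate_0 (w : Idx n -> C) : (fun j => w j + 0) = w.
Proof. apply functional_extensionality. intros; ring. Qed.

Lemma diagonal_chain_rule_ext (F G : (Idx n -> C) -> C) :
  (forall w, F w = G w) -> diagonal_chain_rule F -> diagonal_chain_rule G.
Proof.
  intros E [dF H]. exists dF. intros w. destruct (H w) as [H1 H2]. split.
  - intros i. eapply is_Cderive_ext; [|apply H1]. intros; apply E.
  - eapply is_Cderive_ext; [|apply H2]. intros; apply E.
Qed.

Lemma diagonal_chain_rule_const (c : C) : diagonal_chain_rule (fun _ : Idx n -> C => c).
Proof.
  exists (fun _ _ => RtoC 0). intros w. split.
  - intros i. apply is_Cderive_const.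
  - rewrite sumIdx_zero. apply is_Cderive_const.
Qed.

Lemma diagonal_chain_rule_plus (F G : (Idx n -> C) -> C) :
  diagonal_chain_rule F -> diagonal_chain_rule G -> diagonal_chain_rule (fun w => F w + G w).
Proof.
  intros [dF HF] [dG HG]. exists (fun i w => dF i w + dG i w). intros w.
  destruct (HF w) as [F1 F2], (HG w) as [G1 G2]. split.
  - intros i. apply is_Cderive_plus; auto.
  - rewrite sumIdx_plus. apply is_Cderive_plus; auto.
Qed.

Lemma diagonal_chain_rule_mult (F G : (Idx n -> C) -> C) :
  diagonal_chain_rule F -> diagonal_chain_rule G -> diagonal_chain_rule (fun w => F w * G w).
Proof.
  intros [dF HF] [dG HG]. exists (fun i w => dF i w * G w + F w * dG i w). intros w.
  destruct (HF w) as [F1 F2], (HG w) as [G1 G2]. split.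
  - intros i. eapply is_Cderive_eq; [apply is_Cderive_mult; auto|]. cbv beta. now rewrite upd_id.
  - eapply is_Cderive_eq; [exact (is_Cderive_mult _ _ _ _ _ F2 G2)|].
    cbv beta. rewrite translate_0, sumIdx_plus, <- (sumIdx_mult_l (F w)), Cmult_comm, <- sumIdx_mult_l.
    do 2 f_equal. apply functional_extensionality. intros; ring.
Qed.

Lemma diagonal_chain_rule_pow (F : (Idx n -> C) -> C) m :
  diagonal_chain_rule F -> diagonal_chain_rule (fun w => F w ^ m).
Proof.
  intros H. induction m as [|m IH]; [exact (diagonal_chain_rule_const 1)|].
  exact (diagonal_chain_rule_mult F (fun w => F w ^ m) H IH).
Qed.

Lemma diagonal_chain_rule_fold_plus {A} (l : list A) (F : A -> (Idx n -> C) -> C) :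
  (forall a, In a l -> diagonal_chain_rule (F a)) ->
  diagonal_chain_rule (fun w => fold_right Cplus 0 (map (fun a => F a w) l)).
Proof.
  induction l as [|a l IH]; intros H; [exact (diagonal_chain_rule_const 0)|].
  apply (diagonal_chain_rule_plus (F a)); [apply H; now left|].
  apply IH. intros; apply H; now right.
Qed.

Lemma diagonal_chain_rule_fold_mult {A} (l : list A) (F : A -> (Idx n -> C) -> C) :
  (forall a, In a l -> diagonal_chain_rule (F a)) ->
  diagonal_chain_rule (fun w => fold_right Cmult 1 (map (fun a => F a w) l)).
Proof.
  induction l as [|a l IH]; intros H; [exact (diagonal_chain_rule_const 1)|].
  apply (diagonal_chain_rule_mult (F a)); [apply H; now left|].
  apply IH. intros; apply H; now right.
Qed.

Lemma diagonal_chain_rule_coord k : diagonal_chain_rule (fun w : Idx n -> C => ext (RtoC 0) w k).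
Proof.
  destruct (lt_dec k n) as [Hk|Hk].
  - exists (fun i _ => if Nat.eq_dec (proj1_sig i) k then RtoC 1 else RtoC 0). intros w. split.
    + intros i. destruct (Nat.eq_dec (proj1_sig i) k) as [E|E].
      * eapply is_Cderive_ext; [|apply is_Cderive_id]. intros s.
        rewrite (ext_lt _ _ k Hk). rewrite <- (upd_eq w i s) at 1. f_equal. now apply Idx_eq.
      * eapply is_Cderive_ext; [|apply (is_Cderive_const (ext (RtoC 0) w k))]. intros s.
        rewrite !(ext_lt _ _ k Hk), upd_neq; [reflexivity|simpl; auto].
    + rewrite sumIdx_indicator by exact Hk.
      eapply is_Cderive_eq;
        [eapply is_Cderive_ext; [|apply is_Cderive_plus; [apply (is_Cderive_const (ext (RtoC 0) w k))|apply is_Cderive_id]]|ring].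
      intros t. now rewrite !(ext_lt _ _ k Hk).
  - eapply diagonal_chain_rule_ext; [|apply (diagonal_chain_rule_const 0)].
    intros w. rewrite ext_ge; [reflexivity|lia].
Qed.

Lemma diagonal_chain_rule_mpoly_eval (p : list (C * (Idx n -> nat))) :
  diagonal_chain_rule (fun w => mpoly_eval p w).
Proof.
  apply (diagonal_chain_rule_fold_plus p (fun ce w => fst ce * fold_right Cmult 1
    (map (fun k => Cpow (ext (RtoC 0) w k) (ext 0%nat (snd ce) k)) (seq 0 n)))).
  intros ce _. apply (diagonal_chain_rule_mult (fun _ => fst ce)); [apply diagonal_chain_rule_const|].
  apply (diagonal_chain_rule_fold_mult (seq 0 n)
           (fun k w => Cpow (ext (RtoC 0) w k) (ext 0%nat (snd ce) k))).
  intros k _. apply (diagonal_chain_rule_pow (fun w => ext (RtoC 0) w k)).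
  apply diagonal_chain_rule_coord.
Qed.

Lemma diagonal_chain_rule_diag_prod (N : nat) : diagonal_chain_rule (fun w : Idx n -> C => diag_prod N w).
Proof.
  set (g := fun (w : Idx n -> C) a b => (ext (RtoC 0) w a - ext (RtoC 0) w b) ^ N).
  apply (diagonal_chain_rule_ext (fun w => fold_right Cmult 1
           (map (fun a => fold_right Cmult 1 (map (g w a) (seq (S a) (n - S a)))) (seq 0 n)))).
  { intros w. unfold diag_prod. rewrite <- (map_id (flat_map _ _)), fold_Cmult_flat_map.
    f_equal. apply map_ext. intros a. now rewrite map_id. }
  apply diagonal_chain_rule_fold_mult. intros a _.
  apply diagonal_chain_rule_fold_mult. intros b _.
  apply (diagonal_chain_rule_pow (fun w => ext (RtoC 0) w a - ext (RtoC 0) w b)).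
  apply (diagonal_chain_rule_ext (fun w => ext (RtoC 0) w a + RtoC (-1) * ext (RtoC 0) w b));
    [intros; ring|].
  apply diagonal_chain_rule_plus; [apply diagonal_chain_rule_coord|].
  apply (diagonal_chain_rule_mult (fun _ => RtoC (-1)));
    [apply diagonal_chain_rule_const|apply diagonal_chain_rule_coord].
Qed.

(* Part (ii) of the L(-1)-derivative property only speaks of the sum of the partial
   derivatives; that this sum is the derivative along the diagonal uses that the function
   is a quotient of polynomials, so that [F * D] inherits the chain rule of the polynomial. *)
Lemma is_Cderive_translate_rational (F : (Idx n -> C) -> C) (p : list (C * (Idx n -> nat)))
    (N : nat) (w d : Idx n -> C) :
  (forall z, in_Fn z -> F z = mpoly_eval p z / diag_prod N z) -> in_Fn w ->
  (forall i, is_Cderive (fun s => F (upd w i s)) (w i) (d i)) ->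
  is_Cderive (fun t => F (fun j => w j + t)) 0 (sumIdx d).
Proof.
  intros HF Hw Hd.
  destruct (diagonal_chain_rule_mpoly_eval p) as [dP HP].
  destruct (diagonal_chain_rule_diag_prod N) as [dD HD].
  destruct (HP w) as [P1 P2], (HD w) as [D1 D2].
  assert (Dnz := diag_prod_neq_0 N w Hw).
  assert (Leibniz : forall i, d i * diag_prod N w + F w * dD i w = dP i w).
  { intros i. destruct (in_Fn_upd_nearby w i Hw) as [del [Hdel Hnear]].
    pose proof (is_Cderive_mult _ _ _ _ _ (Hd i) (D1 i)) as M. cbv beta in M. rewrite !upd_id in M.
    eapply is_Cderive_unique; [|exact (P1 i)].
    apply (is_Cderive_ext_ball (fun s => F (upd w i s) * diag_prod N (upd w i s))
             (fun s => mpoly_eval p (upd w i s)) _ _ del Hdel); [|exact M].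
    intros s Hs. rewrite HF by now apply Hnear. field. now apply diag_prod_neq_0, Hnear. }
  assert (D_const : sumIdx (fun i => dD i w) = 0).
  { eapply is_Cderive_unique; [exact D2|].
    eapply is_Cderive_ext; [|apply (is_Cderive_const (diag_prod N w))].
    intros t. symmetry. apply diag_prod_translate. }
  eapply is_Cderive_eq.
  - eapply is_Cderive_ext;
      [|exact (is_Cderive_mult _ (fun _ => / diag_prod N w) _ _ _ P2 (is_Cderive_const _ 0))].
    intros t. cbv beta. rewrite HF by now apply in_Fn_translate. now rewrite diag_prod_translate.
  - transitivity (sumIdx (fun i => / diag_prod N w * dP i w + (- F w / diag_prod N w) * dD i w)).
    + rewrite sumIdx_plus, !sumIdx_mult_l, D_const. cbv beta. ring.
    + f_equal. apply functional_extensionality. intros i. rewrite <- Leibniz. now field.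
Qed.

End DiagonalChainRule.

(** * The functionals [w' o L_W(-1)^k] *)

Section DualOfL1Powers.
Context {W : ModuleSpace C_Ring} (projW : C -> W -> W) (L1W : W -> W).
Hypothesis L1W_linear : Defs.is_linear L1W.
Hypothesis L1W_weight : forall m w, projW m w = w -> projW (m + 1) (L1W w) = L1W w.
Hypothesis projW_idem : forall m w, projW m (projW m w) = projW m w.

Lemma scal_C0 (x : W) : scal (RtoC 0) x = zero.
Proof. exact (scal_zero_l x). Qed.

Lemma scal_C1 (x : W) : scal (RtoC 1) x = x.
Proof. exact (scal_one x). Qed.

Lemma linear_zero (f : W -> W) : Defs.is_linear f -> f zero = zero.
Proof.
  intros H. specialize (H 0 0 zero zero). now rewrite !scal_C0, plus_zero_r in H.
Qed.

Lemma linfun_zero (g : W -> C) : is_linfun g -> g zero = 0.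
Proof.
  intros H. specialize (H 0 0 zero zero). rewrite !scal_C0, plus_zero_r in H. rewrite H. ring.
Qed.

Lemma linfun_plus (g : W -> C) x y : is_linfun g -> g (plus x y) = g x + g y.
Proof. intros H. specialize (H 1 1 x y). rewrite !scal_C1 in H. rewrite H. ring. Qed.

Lemma linfun_scal (g : W -> C) a x : is_linfun g -> g (scal a x) = a * g x.
Proof.
  intros H. pose proof (linfun_zero g H) as Z.
  specialize (H a 0 x zero). rewrite !scal_C0, !plus_zero_r in H. rewrite H, Z. ring.
Qed.

Lemma linfun_sum_n (g : W -> C) (u : nat -> W) K :
  is_linfun g -> g (sum_n u K) = sum_n (fun k => g (u k)) K.
Proof.
  intros Hg. induction K as [|K IH]; [now rewrite !sum_O|].
  now rewrite !sum_Sn, linfun_plus, IH.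
Qed.

Lemma iter_L1W_linear k : Defs.is_linear (Nat.iter k L1W).
Proof.
  induction k as [|k IH]; intros a b x y; [reflexivity|]. simpl. rewrite IH. apply L1W_linear.
Qed.

Lemma iter_L1W_zero k : Nat.iter k L1W zero = zero.
Proof. induction k as [|k IH]; [reflexivity|]. simpl. rewrite IH. now apply linear_zero. Qed.

Lemma iter_L1W_weight k m x :
  projW m x = x -> projW (m + INR k) (Nat.iter k L1W x) = Nat.iter k L1W x.
Proof.
  revert m x. induction k as [|k IH]; intros m x Hx.
  - simpl. now replace (m + RtoC 0) with m by ring.
  - simpl Nat.iter. replace (m + INR (S k)) with (m + INR k + 1) by (rewrite S_INR, RtoC_plus; ring).
    now apply L1W_weight, IH.
Qed.

(* [w' o L_W(-1)^k]: since [L_W(-1)] raises weights by one, its support is that of [w']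
   shifted down by [k]. *)
Definition dual_L1_pow (k : nat) (w' : Wdual projW) : Wdual projW.
Proof.
  refine (Build_Wdual W projW (fun x => dfun w' (Nat.iter k L1W x))
            (map (fun m => m - INR k) (dsupp w')) _ _ _).
  - intros a b x y. cbv beta. rewrite iter_L1W_linear. apply dfun_lin.
  - apply Injective_map_NoDup; [|apply dsupp_nodup].
    intros x y E. replace x with (x - INR k + INR k) by ring. rewrite E. ring.
  - intros m x Hm. cbv beta. rewrite <- (iter_L1W_weight k m (projW m x)) by apply projW_idem.
    apply dsupp_spec. intros E. apply Hm, in_map_iff. exists (m + INR k). split; [ring|exact E].
Defined.

Lemma pairing_fold (w' : Wdual projW) f :
  pairing w' f = fold_right Cplus 0 (map (fun m => dfun w' (f m)) (dsupp w')).
Proof.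
  unfold pairing, lsum. rewrite map_id.
  induction (dsupp w') as [|a l IH]; [reflexivity|]. cbn [fold_right map]. now rewrite IH.
Qed.

Lemma pairing_dual_L1_pow k (w' : Wdual projW) f :
  pairing (dual_L1_pow k w') f
  = fold_right Cplus 0 (map (fun m => dfun w' (Nat.iter k L1W (f (m - INR k)))) (dsupp w')).
Proof. rewrite pairing_fold. simpl. now rewrite map_map. Qed.

Lemma pairing_dual_L1_pow_0 (w' : Wdual projW) f : pairing (dual_L1_pow 0 w') f = pairing w' f.
Proof.
  rewrite pairing_dual_L1_pow, pairing_fold. f_equal. apply map_ext. intros m. simpl.
  now replace (m - RtoC 0) with m by ring.
Qed.

Lemma pairing_dual_L1_pow_Lbar k (w' : Wdual projW) f :
  pairing (dual_L1_pow k w') (Lbar L1W f) = pairing (dual_L1_pow (S k) w') f.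
Proof.
  rewrite !pairing_dual_L1_pow. f_equal. apply map_ext. intros m. unfold Lbar.
  rewrite Nat.iter_succ_r. do 4 f_equal. rewrite S_INR, RtoC_plus. ring.
Qed.

Variable r : R.
Hypothesis projW_low : forall m w, (Re m < r)%R -> projW m w = zero.

Lemma dsupp_bound (w' : Wdual projW) : exists K : nat, forall m, In m (dsupp w') -> (Re m - r < INR K)%R.
Proof.
  induction (dsupp w') as [|a l [K HK]]; [exists 0%nat; intros m []|].
  destruct (INR_unbounded (Re a - r)) as [K2 HK2].
  exists (max K K2). intros m [<-|Hm]; eapply Rlt_le_trans; try apply le_INR.
  - exact HK2.
  - lia.
  - now apply HK.
  - lia.
Qed.

Lemma Wbar_low (f : C -> W) m : is_Wbar projW f -> (Re m < r)%R -> f m = zero.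
Proof. intros Hf Hm. rewrite <- (Hf m). now apply projW_low. Qed.

Section Support.
Variables (w' : Wdual projW) (K : nat).
Hypothesis K_bound : forall m, In m (dsupp w') -> (Re m - r < INR K)%R.

Lemma pairing_dual_L1_pow_large k f :
  (K <= k)%nat -> is_Wbar projW f -> pairing (dual_L1_pow k w') f = 0.
Proof.
  intros Hk Hf. rewrite pairing_dual_L1_pow. apply fold_Cplus_map_zero. intros m Hm.
  cbv beta. rewrite (Wbar_low f), iter_L1W_zero; [now apply linfun_zero, dfun_lin|exact Hf|].
  specialize (K_bound m Hm). apply le_INR in Hk. change (Re m - INR k < r)%R. lra.
Qed.

Lemma pairing_expLbar zz f : is_Wbar projW f ->
  pairing w' (expLbar L1W zz f)
  = sum_n (fun k => zz ^ k / INR (fact k) * pairing (dual_L1_pow k w') f) K.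
Proof.
  intros Hf. rewrite pairing_fold.
  transitivity (fold_right Cplus 0 (map (fun m => sum_n (fun k => zz ^ k / INR (fact k) *
       dfun w' (Nat.iter k L1W (f (m - INR k)))) K) (dsupp w'))).
  - f_equal. apply map_ext_in. intros m Hm. unfold expLbar. rewrite (efsum_eq_sum_n _ K).
    + rewrite linfun_sum_n by apply dfun_lin. apply sum_n_ext. intros k.
      apply linfun_scal, dfun_lin.
    + intros k Hk. rewrite (Wbar_low f), iter_L1W_zero; [apply scal_zero_r|exact Hf|].
      specialize (K_bound m Hm). assert (INR K < INR k)%R by (apply lt_INR; lia).
      change (Re m - INR k < r)%R. lra.
  - rewrite fold_Cplus_map_sum_n. apply sum_n_ext. intros k.
    now rewrite fold_Cplus_map_mult_l, pairing_dual_L1_pow.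
Qed.

End Support.
End DualOfL1Powers.

Section Line.
Variables (n : nat) (z : Idx n -> C) (i : Idx n) (rho : R).
Hypothesis separated : forall j k : Idx n, proj1_sig j <> proj1_sig k -> (rho <= Cmod (z j - z k))%R.

Lemma in_Fn_upd_translate t : in_Fn z -> (Cmod t < rho)%R -> in_Fn (upd z i (z i + t)).
Proof.
  intros Hz Ht.
  assert (Hfar : forall k : Idx n, proj1_sig k <> proj1_sig i -> z i + t <> z k).
  { intros k Hk E. specialize (separated k i Hk).
    replace (z k - z i) with t in separated by (rewrite <- E; ring). lra. }
  intros j k Hjk. unfold upd.
  destruct (Nat.eq_dec (proj1_sig j) (proj1_sig i)), (Nat.eq_dec (proj1_sig k) (proj1_sig i));
    try lia; auto.
  intros E. apply (Hfar j); auto.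
Qed.

Lemma taylor_on_disk_upd_translate j : taylor_on_disk rho (fun t => upd z i (z i + t) j).
Proof.
  unfold upd. destruct Nat.eq_dec; [apply taylor_on_disk_translate|apply taylor_on_disk_const].
Qed.

Lemma taylor_on_disk_upd_translate_inv_diff (a b : Idx n) : proj1_sig a <> proj1_sig b ->
  taylor_on_disk rho (fun t => / (upd z i (z i + t) a - upd z i (z i + t) b)).
Proof.
  intros Hab. unfold upd.
  destruct (Nat.eq_dec (proj1_sig a) (proj1_sig i)) as [Ea|Ea],
           (Nat.eq_dec (proj1_sig b) (proj1_sig i)) as [Eb|Eb]; try lia.
  - apply (taylor_on_disk_ext rho (fun t => / (z i - z b + t))); [intros t _; f_equal; ring|].
    apply taylor_on_disk_inv_translate, separated. congruence.
  - apply (taylor_on_disk_ext rho (fun t => RtoC (-1) * / (z i - z a + t))).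
    { intros t _. replace (z a - (z i + t)) with (RtoC (-1) * (z i - z a + t)) by ring.
      rewrite Cinv_mult_total. f_equal. now field. }
    apply taylor_on_disk_mult; [apply taylor_on_disk_const|].
    apply taylor_on_disk_inv_translate, separated. congruence.
  - apply taylor_on_disk_const.
Qed.

End Line.

Lemma exists_radius_between {n} (z : Idx n -> C) (zz : C) :
  (forall j k : Idx n, proj1_sig j <> proj1_sig k -> (Cmod zz < Cmod (z j - z k))%R) ->
  exists rho, (Cmod zz < rho)%R /\
    forall j k : Idx n, proj1_sig j <> proj1_sig k -> (rho <= Cmod (z j - z k))%R.
Proof.
  intros Hsep.
  destruct (list_lower_bound_gt (list_prod (seq 0 n) (seq 0 n))
     (fun p => if Nat.eq_dec (fst p) (snd p) then (Cmod zz + 1)%R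
               else Cmod (ext (RtoC 0) z (fst p) - ext (RtoC 0) z (snd p))) (Cmod zz))
    as [rho [Hrho Hl]].
  - intros [j k] [Hj%in_seq Hk%in_seq]%in_prod_iff. simpl.
    destruct Nat.eq_dec; [lra|].
    assert (Hj' : (j < n)%nat) by lia. assert (Hk' : (k < n)%nat) by lia.
    rewrite (ext_lt _ _ j Hj'), (ext_lt _ _ k Hk'). apply Hsep. simpl. auto.
  - exists rho. split; [exact Hrho|]. intros [j Hj] [k Hk] Hjk. simpl in Hjk.
    specialize (Hl (j, k) ltac:(apply in_prod; apply in_seq; lia)). simpl in Hl.
    destruct Nat.eq_dec; [congruence|]. now rewrite (ext_lt _ _ j Hj), (ext_lt _ _ k Hk) in Hl.
Qed.

(** * Expansions of [Phi] *)

Section L1DerivativeProperty.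
Context {V W : ModuleSpace C_Ring} (LV : V -> V) (projW : C -> W -> W) (L1W : W -> W) {n : nat}
  (Phi : (Idx n -> V) -> (Idx n -> C) -> C -> W).
Hypothesis Phi_Wtilde : forall v, in_Wtilde projW (Phi v).
Hypothesis Phi_L1_derivative : L1_derivative_property LV projW L1W Phi.

Lemma is_Cderive_pairing_upd_translate (v : Idx n -> V) (w' : Wdual projW) (z : Idx n -> C)
    (i : Idx n) k t :
  in_Fn (upd z i (z i + t)) ->
  is_Cderive (fun s => pairing w' (Phi (upd v i (Nat.iter k LV (v i))) (upd z i (z i + s)))) t
    (pairing w' (Phi (upd v i (Nat.iter (S k) LV (v i))) (upd z i (z i + t)))).
Proof.
  intros Hz.
  pose proof (proj1 Phi_L1_derivative (upd v i (Nat.iter k LV (v i))) w' _ i Hz) as D.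
  rewrite !upd_eq, upd_upd in D.
  eapply is_Cderive_eq.
  - eapply is_Cderive_ext; [|exact (is_Cderive_comp _ (fun u => z i + u) t _ _ D
                                      (is_Cderive_plus _ _ t _ _ (is_Cderive_const _ t) (is_Cderive_id t)))].
    intros u. cbv beta. now rewrite upd_upd.
  - change (Nat.iter (S k) LV (v i)) with (LV (Nat.iter k LV (v i))). Cring.
Qed.

Lemma pairing_upd_translate_taylor (v : Idx n -> V) (w' : Wdual projW) (z : Idx n -> C)
    (i : Idx n) (zz : C) :
  in_Fn z ->
  (forall j k : Idx n, proj1_sig j <> proj1_sig k -> (Cmod zz < Cmod (z j - z k))%R) ->
  let a := fun k : nat =>
    / INR (fact k) * pairing w' (Phi (upd v i (Nat.iter k LV (v i))) z) in
  ex_series (fun k => Cmod (a k * zz ^ k)) /\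
  is_Cseries (fun k => a k * zz ^ k) (pairing w' (Phi v (upd z i (z i + zz)))).
Proof.
  intros Hz Hsep a.
  destruct (exists_radius_between z zz Hsep) as [rho [Hzz Hrho]].
  set (g := fun k t => pairing w' (Phi (upd v i (Nat.iter k LV (v i))) (upd z i (z i + t)))).
  assert (Hg0 : taylor_on_disk rho (g 0%nat)).
  { unfold g. simpl Nat.iter. rewrite upd_id.
    refine (taylor_on_disk_rational_diag rho n (fun t => upd z i (z i + t)) _ _
              (fun x => pairing w' (Phi v x)) _ _).
    - apply taylor_on_disk_upd_translate.
    - intros a' b Hab. apply (taylor_on_disk_upd_translate_inv_diff n z i rho Hrho). lia.
    - apply (proj2 (Phi_Wtilde v)).
    - intros t Ht. now apply (in_Fn_upd_translate n z i rho Hrho). }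
  destruct (taylor_coefficients_from_derivatives rho (g 0%nat) g Hg0 (fun _ _ => eq_refl)
              (fun k t Ht => is_Cderive_pairing_upd_translate v w' z i k t
                               (in_Fn_upd_translate n z i rho Hrho t Hz Ht)) zz Hzz) as [S1 S2].
  assert (E : forall k, / INR (fact k) * g k 0 * zz ^ k = a k * zz ^ k).
  { intros k. unfold a, g. now rewrite Cplus_0_r, upd_id. }
  assert (E0 : g 0%nat zz = pairing w' (Phi v (upd z i (z i + zz)))).
  { unfold g. simpl Nat.iter. now rewrite upd_id. }
  split.
  - eapply ex_series_ext; [|exact S1]. intros k. cbv beta. now rewrite E.
  - rewrite <- E0. eapply is_series_ext; [|exact S2]. intros k. cbv beta. now rewrite E.
Qed.

Section Translation.
Hypothesis L1W_linear : Defs.is_linear L1W.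
Hypothesis L1W_weight : forall m w, projW m w = w -> projW (m + 1) (L1W w) = L1W w.
Hypothesis projW_idem : forall m w, projW m (projW m w) = projW m w.
Variable r : R.
Hypothesis projW_low : forall m w, (Re m < r)%R -> projW m w = zero.

Let dual := dual_L1_pow projW L1W L1W_linear L1W_weight projW_idem.

Lemma is_Cderive_pairing_dual_translate (v : Idx n -> V) (w' : Wdual projW) (z : Idx n -> C) k t :
  in_Fn z ->
  is_Cderive (fun s => pairing (dual k w') (Phi v (fun j => z j + s))) t
    (pairing (dual (S k) w') (Phi v (fun j => z j + t))).
Proof.
  intros Hz. apply is_Cderive_translate.
  set (u := fun j => z j + t). assert (Hu : in_Fn u) by now apply in_Fn_translate.
  destruct (proj2 (Phi_Wtilde v) (dual k w')) as [p [N HpN]].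
  destruct Phi_L1_derivative as [Hpartial Hsum].
  set (d := fun i => pairing (dual k w') (Phi (upd v i (LV (v i))) u)).
  eapply is_Cderive_eq.
  - eapply is_Cderive_ext;
      [|exact (is_Cderive_translate_rational n (fun x => pairing (dual k w') (Phi v x)) p N u d
                 HpN Hu (fun i => Hpartial v _ u i Hu))].
    intros s. cbv beta. do 2 f_equal. apply functional_extensionality. intros j. unfold u. ring.
  - rewrite (Hsum v (dual k w') u Hu d (fun i => Hpartial v _ u i Hu)).
    apply pairing_dual_L1_pow_Lbar.
Qed.

Lemma pairing_expLbar_translate (v : Idx n -> V) (w' : Wdual projW) (z : Idx n -> C) (zz : C) :
  in_Fn z -> pairing w' (expLbar L1W zz (Phi v z)) = pairing w' (Phi v (fun j => z j + zz)).
Proof.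
  intros Hz.
  set (g := fun k t => pairing (dual k w') (Phi v (fun j => z j + t))).
  assert (Hg0 : g 0%nat = fun t => pairing w' (Phi v (fun j => z j + t))).
  { apply functional_extensionality. intros t. apply pairing_dual_L1_pow_0. }
  assert (Htaylor : taylor_on_disk (Cmod zz + 1) (g 0%nat)).
  { rewrite Hg0.
    refine (taylor_on_disk_rational_diag _ n (fun t j => z j + t) _ _
              (fun x => pairing w' (Phi v x)) _ _).
    - intros j. apply taylor_on_disk_translate.
    - intros a b _. eapply taylor_on_disk_ext; [|apply (taylor_on_disk_const _ (/ (z a - z b)))].
      intros t _. cbv beta. f_equal. ring.
    - apply (proj2 (Phi_Wtilde v)).
    - intros t _. now apply in_Fn_translate. }
  destruct (taylor_coefficients_from_derivatives _ (g 0%nat) g Htaylor (fun _ _ => eq_refl)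
              (fun k t _ => is_Cderive_pairing_dual_translate v w' z k t Hz) zz ltac:(lra))
    as [_ Hseries].
  assert (HWbar : is_Wbar projW (Phi v z)) by now apply (proj1 (Phi_Wtilde v)).
  assert (Hgk : forall k, g k 0 = pairing (dual k w') (Phi v z)).
  { intros k. unfold g. now rewrite translate_0. }
  destruct (dsupp_bound projW r w') as [K HK].
  assert (Hfinite : is_Cseries (fun k => / INR (fact k) * g k 0 * zz ^ k)
                      (sum_n (fun k => / INR (fact k) * g k 0 * zz ^ k) K)).
  { apply (is_series_eventually_zero (K := C_AbsRing) (V := C_NormedModule)).
    intros k Hk. rewrite Hgk.
    rewrite (pairing_dual_L1_pow_large projW L1W L1W_linear L1W_weight projW_idem r projW_low w' K HK)
      by (lia || exact HWbar).
    Cring. }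
  replace (pairing w' (Phi v (fun j => z j + zz))) with (g 0%nat zz) by now rewrite Hg0.
  rewrite (is_Cseries_unique _ _ _ Hseries Hfinite).
  rewrite (pairing_expLbar projW L1W L1W_linear L1W_weight projW_idem r projW_low w' K HK)
    by exact HWbar.
  apply sum_n_ext. intros k. rewrite Hgk. unfold Cdiv, dual. Cring.
Qed.

End Translation.
End L1DerivativeProperty.

Theorem proposition3p4
  (V : ModuleSpace C_Ring) (projV : Z -> V -> V) (YV : V -> Z -> V -> V) (one : V)
  (HV : is_GRVA projV YV one)
  (W : ModuleSpace C_Ring) (projW : C -> W -> W) (YW : V -> Z -> W -> W)
  (L0W L1W : W -> W)
  (HW : is_GRGModule projV YV one projW YW L0W L1W)
  (n : nat) (Hn : (1 <= n)%nat)
  (Phi : (Idx n -> V) -> (Idx n -> C) -> C -> W)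
  (HPhi_lin : multilinear_Phi Phi)
  (HPhi_W : forall v, in_Wtilde projW (Phi v))
  (HPhi_D : L1_derivative_property (LV1 YV one) projW L1W Phi) :
  (forall (v : Idx n -> V) (w' : Wdual projW) (z : Idx n -> C) (zz : C),
     in_Fn z ->
     pairing w' (expLbar L1W zz (Phi v z))
     = pairing w' (Phi v (fun j => (z j + zz)%C)))
  /\
  (forall (v : Idx n -> V) (w' : Wdual projW) (z : Idx n -> C) (i : Idx n) (zz : C),
     in_Fn z ->
     (forall j k : Idx n, proj1_sig j <> proj1_sig k -> (Cmod zz < Cmod (z j - z k)%C)%R) ->
     let a := fun k : nat =>
       (/ RtoC (INR (fact k)) *
        pairing w' (Phi (upd v i (Nat.iter k (LV1 YV one) (v i))) z))%C in
     ex_series (fun k => Cmod (a k * Cpow zz k)%C) /\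
     is_series (K := C_AbsRing) (V := C_NormedModule)
       (fun k => (a k * Cpow zz k)%C)
       (pairing w' (Phi v (upd z i (z i + zz)%C)))).
Proof.
  destruct (md_lower _ _ _ _ _ _ _ HW) as [r Hlow].
  split.
  - intros v w' z zz Hz.
    exact (pairing_expLbar_translate (LV1 YV one) projW L1W Phi HPhi_W HPhi_D
             (md_L1_lin _ _ _ _ _ _ _ HW) (md_L1_wt _ _ _ _ _ _ _ HW)
             (md_proj_idem _ _ _ _ _ _ _ HW) r Hlow v w' z zz Hz).
  - exact (pairing_upd_translate_taylor (LV1 YV one) projW L1W Phi HPhi_W HPhi_D).
Qed.
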